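(* Let $\Omega$ be a set, let $n\ge 1$, and let $H_1,\ldots,H_n$ and $G$ be subgroups of $\mathrm{Sym}(\Omega)$ such that the $n$-tuple $(H_1,\ldots,H_n)$ is confined by $G$. Let $P\subset \mathrm{Sym}(\Omega)$ be a confining subset for $(H_1,\ldots,H_n,G)$ and let $r=|P|$. Assume that $\{\Omega_\sigma\}_{\sigma\in P}$ is a displacement configuration for $P$ such that for every $\sigma\in P$ the group $\mathrm{Rist}_G(\Omega_\sigma)$ is non-trivial and satisfies $\mathrm{FC}_{\leqslant nr}(\mathrm{Rist}_G(\Omega_\sigma))=\{1\}$. Then there exist $\rho\in P$ and $k\le n$ such that $H_k$ contains a non-trivial subgroup $N\le \mathrm{Rist}_G(\Omega_\rho)$ whose normalizer in $\mathrm{Rist}_G(\Omega_\rho)$ has index at most $nr$ in $\mathrm{Rist}_G(\Omega_\rho)$.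
   Context: For subgroups $H_1,\ldots,H_n,G$ of a group $L$, the $n$-tuple $(H_1,\ldots,H_n)$ is confined by $G$ if there exists a finite subset $P$ of non-trivial elements of $L$ such that for every $g\in G$ there exists $j$ with $gH_jg^{-1}\cap P\neq\varnothing$; such a $P$ is called a confining subset for $(H_1,\ldots,H_n,G)$. Here $L=\mathrm{Sym}(\Omega)$, the group of all permutations of $\Omega$. For $\Sigma\subset\Omega$, the rigid stabilizer $\mathrm{Rist}_G(\Sigma)$ is the set of elements of $G$ fixing every point of $\Omega\setminus\Sigma$. For a group $K$ and $m\ge1$, $\mathrm{FC}_{\leqslant m}(K)$ is the set of elements of $K$ whose conjugacy class in $K$ has cardinality at most $m$. If $P$ is a finite set of non-trivial elements of $\mathrm{Sym}(\Omega)$, a collection $\{\Omega_\sigma\}_{\sigma\in P}$ of non-empty subsets of $\Omega$ is a displacement configuration for $P$ if: (C1) for all $\sigma,\rho\in P$, either $\Omega_\sigma=\Omega_\rho$ or $\Omega_\sigma\cap\Omega_\rho=\varnothing$; (C3) for all $\sigma,\rho\in P$, either $\sigma$ fixes $\Omega_\rho$ pointwise, or $\sigma(\Omega_\rho)$ is disjoint from $\bigcup_{\alpha\in P}\Omega_\alpha$; (C4) for all $\sigma\in P$, $\sigma(\Omega_\sigma)$ is disjoint from $\bigcup_{\alpha\in P}\Omega_\alpha$ and from $\bigcup_{\alpha\in P}\sigma^{-1}(\Omega_\alpha)$. *)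

(* Permutations of an arbitrary (possibly infinite) type Omega
   are represented as bijective functions Omega -> Omega; subsets of Sym(Omega)
   as predicates on such functions. *)
From Stdlib Require Import List Arith.
Import ListNotations.

Section Defs.
Variable Omega : Type.

Definition perm := Omega -> Omega.
Definition pset := perm -> Prop.

Definition idp : perm := fun x => x.
Definition comp (f g : perm) : perm := fun x => f (g x).

Definition is_perm (f : perm) : Prop :=
  exists g : perm, (forall x, g (f x) = x) /\ (forall x, f (g x) = x).

Definition is_subgroup (H : pset) : Prop :=
  (forall f, H f -> is_perm f) /\ H idp /\
  (forall f g, H f -> H g -> H (comp f g)) /\
  (forall f, H f -> exists g, H g /\ (forall x, g (f x) = x) /\ (forall x, f (g x) = x)).

Definition subset (A B : pset) : Prop := forall f, A f -> B f.

(* x belongs to g H g^{-1}  (for g a permutation: x = g h g^{-1} iff x g = g h) *)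
Definition conj_set (g : perm) (H : pset) : pset :=
  fun x => exists h, H h /\ comp x g = comp g h.

Definition card_le (S : pset) (m : nat) : Prop :=
  exists l : list perm, length l <= m /\ forall y, S y -> In y l.

Definition confining_subset (n : nat) (H : nat -> pset) (G : pset) (P : list perm) : Prop :=
  (forall p, In p P -> is_perm p /\ p <> idp) /\
  forall g, G g -> exists j, j < n /\ exists p, In p P /\ conj_set g (H j) p.

Definition confined (n : nat) (H : nat -> pset) (G : pset) : Prop :=
  exists P : list perm, NoDup P /\ confining_subset n H G P.

(* displacement configuration {Om s}_{s in P}, conditions (C1), (C3), (C4) *)
Definition displacement_configuration (P : list perm) (Om : perm -> Omega -> Prop) : Prop :=
  (forall s, In s P -> exists x, Om s x) /\
  (forall s r, In s P -> In r P ->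
     (forall x, Om s x <-> Om r x) \/ (forall x, ~ (Om s x /\ Om r x))) /\
  (forall s r, In s P -> In r P ->
     (forall x, Om r x -> s x = x) \/
     (forall x, Om r x -> forall a, In a P -> ~ Om a (s x))) /\
  (forall s, In s P -> forall x, Om s x -> forall a, In a P ->
     ~ Om a (s x) /\ ~ Om a (s (s x))).

Definition Rist (G : pset) (Sigma : Omega -> Prop) : pset :=
  fun g => G g /\ forall x, ~ Sigma x -> g x = x.

Definition conj_class (K : pset) (g : perm) : pset :=
  fun y => exists k, K k /\ comp y k = comp k g.

Definition FC_le (m : nat) (K : pset) : pset :=
  fun g => K g /\ card_le (conj_class K g) m.

Definition normalizer (K N : pset) : pset :=
  fun g => K g /\ forall x, conj_set g N x <-> N x.

Definition index_le (K S : pset) (m : nat) : Prop :=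
  exists l : list perm, length l <= m /\ (forall t, In t l -> K t) /\
    forall g, K g -> exists t s, In t l /\ S s /\ g = comp t s.

End Defs.

Arguments idp {Omega}.

(* Suppose no such [N] exists.  Group [P] by blocks [Ω_σ] and take the block products
   [γ = g_1 ... g_m] with [g_i] in the rigid stabilizer of the [i]-th block; [γ] lies in [G],
   so by confinement it conjugates some [σ] of [P] into some [H_j].  Fix [(j, σ)].  Either no
   two such [γ] differ by a nontrivial element of [Rist_G(Ω_σ)], and then the solutions form a
   graph over the other coordinates; or two do, and then, [Ω_σ] being displaced by [σ], the
   [σ]-coordinates of all solutions lie in one coset of a subgroup of index [> n r] of
   [Rist_G(Ω_σ)]: the normalizer of [H_j ∩ Rist_G(Ω_σ)] if this intersection is nontrivial, the
   centralizer of an element otherwise, as [FC_{≤ n r}] is trivial.  With B. H. Neumann's lemma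
   (a group is not covered by [k] cosets of subgroups of index [> k]) one picks, in each block,
   more candidates than there are graphs, all avoiding the cosets; counting then produces a
   product [γ] that no pair [(j, σ)] accounts for. *)

From Stdlib Require Import List Arith Lia Classical ClassicalEpsilon FunctionalExtensionality PropExtensionality.
Import ListNotations.

Lemma choice_on {A B : Type} (D : A -> Prop) (Q : A -> B -> Prop) (b0 : B) :
  (forall a, D a -> exists b, Q a b) -> exists f : A -> B, forall a, D a -> Q a (f a).
Proof.
  intro HQ. apply (choice (fun a b => D a -> Q a b)). intro a.
  destruct (classic (D a)) as [Ha|Ha].
  - destruct (HQ a Ha) as [b Hb]. exists b. auto.
  - exists b0. tauto.
Qed.

(** * Counting in lists *)

Definition filter_sat {A : Type} (Q : A -> Prop) (l : list A) : list A :=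
  filter (fun x => if excluded_middle_informative (Q x) then true else false) l.

Definition count_sat {A : Type} (Q : A -> Prop) (l : list A) : nat := length (filter_sat Q l).

Lemma in_filter_sat {A : Type} (Q : A -> Prop) (l : list A) x : In x (filter_sat Q l) <-> In x l /\ Q x.
Proof.
  unfold filter_sat. rewrite filter_In.
  destruct (excluded_middle_informative (Q x)); intuition discriminate.
Qed.

Lemma length_filter_sat_le {A : Type} (Q : A -> Prop) (l : list A) : length (filter_sat Q l) <= length l.
Proof. apply filter_length_le. Qed.

Lemma length_filter_sat_compl {A : Type} (Q : A -> Prop) (l : list A) :
  length (filter_sat Q l) + length (filter_sat (fun x => ~ Q x) l) = length l.
Proof.
  unfold filter_sat. induction l as [|a l IH]; simpl; auto.
  destruct (excluded_middle_informative (Q a)), (excluded_middle_informative (~ Q a)); simpl; tauto || lia.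
Qed.

Lemma count_sat_cons {A : Type} (Q : A -> Prop) a l :
  count_sat Q (a :: l) = (if excluded_middle_informative (Q a) then 1 else 0) + count_sat Q l.
Proof. unfold count_sat, filter_sat. simpl. destruct (excluded_middle_informative (Q a)); reflexivity. Qed.

Lemma count_sat_app {A : Type} (Q : A -> Prop) l1 l2 : count_sat Q (l1 ++ l2) = count_sat Q l1 + count_sat Q l2.
Proof. unfold count_sat, filter_sat. rewrite filter_app, length_app. reflexivity. Qed.

Lemma count_sat_flat_map {A C : Type} (Q : A -> Prop) (f : C -> list A) l :
  count_sat Q (flat_map f l) = list_sum (map (fun x => count_sat Q (f x)) l).
Proof. induction l as [|a l IH]; simpl; auto. rewrite count_sat_app, IH. reflexivity. Qed.

Lemma count_sat_pos {A : Type} (Q : A -> Prop) (l : list A) x : In x l -> Q x -> 1 <= count_sat Q l.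
Proof.
  intros Hx HQ. unfold count_sat.
  assert (Hin := proj2 (in_filter_sat Q l x) (conj Hx HQ)).
  destruct (filter_sat Q l); [contradiction|simpl; lia].
Qed.

Lemma count_sat_le_1 {A : Type} (Q : A -> Prop) (l : list A) :
  (forall x y, In x l -> In y l -> Q x -> Q y -> x = y) -> NoDup l -> count_sat Q l <= 1.
Proof.
  intros Huniq Hl. unfold count_sat.
  assert (Hnd : NoDup (filter_sat Q l)) by (apply NoDup_filter; auto).
  destruct (filter_sat Q l) as [|x0 rest] eqn:E; simpl; [lia|].
  change (length (x0 :: rest) <= length [x0]). apply NoDup_incl_length; auto.
  intros y Hy. left.
  assert (H0 : In x0 (x0 :: rest)) by (left; reflexivity). rewrite <- E in H0, Hy.
  apply in_filter_sat in H0 as [H0 HQ0]. apply in_filter_sat in Hy as [Hy HQ]. auto.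
Qed.

Lemma list_sum_count_sat_comm {A B : Type} (Q : A -> B -> Prop) (U : list A) (T : list B) :
  list_sum (map (fun x => count_sat (Q x) T) U) =
  list_sum (map (fun t => count_sat (fun x => Q x t) U) T).
Proof.
  induction U as [|a U IH]; simpl.
  - induction T; simpl; auto.
  - rewrite IH. clear IH. induction T as [|b T IHT]; simpl; auto.
    rewrite count_sat_cons, count_sat_cons. simpl in IHT. lia.
Qed.

Lemma list_sum_map_le_mul {B : Type} (f : B -> nat) (l : list B) k :
  (forall b, In b l -> f b <= k) -> list_sum (map f l) <= length l * k.
Proof.
  induction l as [|b l IH]; intros Hf; simpl; auto.
  specialize (Hf b (or_introl eq_refl)) as Hb. specialize (IH (fun b' Hb' => Hf b' (or_intror Hb'))). lia.
Qed.

Lemma length_le_list_sum_map {B : Type} (f : B -> nat) (l : list B) :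
  (forall b, In b l -> 1 <= f b) -> length l <= list_sum (map f l).
Proof.
  induction l as [|b l IH]; intros Hf; simpl; auto.
  specialize (Hf b (or_introl eq_refl)) as Hb. specialize (IH (fun b' Hb' => Hf b' (or_intror Hb'))). lia.
Qed.

Lemma length_le_sum_count_sat {A B : Type} (X : list A) (F : list B) (Q : B -> A -> Prop) :
  (forall x, In x X -> exists b, In b F /\ Q b x) ->
  length X <= list_sum (map (fun b => count_sat (Q b) X) F).
Proof.
  intro Hcov. rewrite (list_sum_count_sat_comm Q F X). apply length_le_list_sum_map.
  intros x Hx. destruct (Hcov x Hx) as [b [Hb HQ]]. exact (count_sat_pos _ F b Hb HQ).
Qed.

Lemma exists_partition_pairs {A : Type} (n : nat) (l : list A) (Q : nat -> A -> Prop) :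
  exists L1 L2 : list (nat * A),
    (forall j a, In (j, a) L1 <-> j < n /\ In a l /\ Q j a) /\
    (forall j a, In (j, a) L2 <-> j < n /\ In a l /\ ~ Q j a) /\
    length L1 + length L2 = n * length l.
Proof.
  set (pairs := list_prod (seq 0 n) l).
  assert (Hpairs : forall j a, In (j, a) pairs <-> j < n /\ In a l).
  { intros j a. unfold pairs. rewrite in_prod_iff, in_seq. split; intros [? ?]; split; auto; lia. }
  exists (filter_sat (fun ja => Q (fst ja) (snd ja)) pairs), (filter_sat (fun ja => ~ Q (fst ja) (snd ja)) pairs).
  split; [|split].
  - intros j a. rewrite in_filter_sat, Hpairs. simpl. tauto.
  - intros j a. rewrite in_filter_sat, Hpairs. simpl. tauto.
  - rewrite length_filter_sat_compl. unfold pairs. rewrite length_prod, length_seq. reflexivity.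
Qed.

Lemma list_sum_map_mul_le {B : Type} (f : B -> nat) (l : list B) k M :
  (forall b, In b l -> f b * k <= M) -> list_sum (map f l) * k <= length l * M.
Proof.
  induction l as [|b l IH]; intros Hf; simpl; auto.
  specialize (Hf b (or_introl eq_refl)) as Hb. specialize (IH (fun b' Hb' => Hf b' (or_intror Hb'))). nia.
Qed.

Lemma NoDup_list_prod {A B : Type} (l1 : list A) (l2 : list B) :
  NoDup l1 -> NoDup l2 -> NoDup (list_prod l1 l2).
Proof.
  induction l1 as [|a l1 IH]; intros H1 H2; simpl; [constructor|].
  inversion H1; subst. apply NoDup_app; auto.
  - apply NoDup_map_NoDup_ForallPairs; auto. intros x y _ _ E. injection E; auto.
  - intros [a' b] Hin Hin'. apply in_map_iff in Hin as [b' [E _]]. injection E as <- _.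
    apply in_prod_iff in Hin' as [Ha _]. contradiction.
Qed.

(** * Grids of tuples *)

Section Tuples.
Variable X : Type.

Fixpoint tuples (Us : list (list X)) : list (list X) :=
  match Us with
  | [] => [[]]
  | U :: Us' => flat_map (fun x => map (cons x) (tuples Us')) U
  end.

Lemma in_tuples_cons x t U Us : In x U -> In t (tuples Us) -> In (x :: t) (tuples (U :: Us)).
Proof. intros Hx Ht. simpl. apply in_flat_map. exists x. split; auto. apply in_map; auto. Qed.

Lemma in_tuples Us t x0 :
  In t (tuples Us) ->
  length t = length Us /\ forall i, i < length Us -> In (nth i t x0) (nth i Us []).
Proof.
  revert t. induction Us as [|U Us IH]; intros t Ht; simpl in *.
  - destruct Ht as [<-|[]]. split; auto. lia.
  - apply in_flat_map in Ht as [x [Hx Ht]]. apply in_map_iff in Ht as [t' [<- Ht']].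
    destruct (IH t' Ht') as [Hlen Hnth]. simpl. split; [lia|].
    intros [|i] Hi; simpl; auto. apply Hnth. lia.
Qed.

Lemma length_tuples Us s :
  (forall U, In U Us -> length U = s) -> length (tuples Us) = s ^ length Us.
Proof.
  induction Us as [|U Us IH]; intros HU; simpl; auto.
  rewrite length_flat_map, (map_ext _ (fun _ => s ^ length Us)).
  - transitivity (length U * s ^ length Us).
    + clear. induction U as [|x U IHU]; simpl; lia.
    + rewrite (HU U (or_introl eq_refl)). reflexivity.
  - intro x. rewrite length_map. apply IH. intros; apply HU; right; auto.
Qed.

Variable x0 : X.

Definition agree_off (d : nat) (t t' : list X) : Prop :=
  forall i, i <> d -> nth i t x0 = nth i t' x0.

Definition single_on_lines (Us : list (list X)) (d : nat) (Q : list X -> Prop) : Prop :=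
  forall t t', In t (tuples Us) -> In t' (tuples Us) -> agree_off d t t' -> Q t -> Q t' -> t = t'.

Lemma count_sat_single_on_lines Us s d Q :
  (forall U, In U Us -> length U = s /\ NoDup U) -> d < length Us -> single_on_lines Us d Q ->
  count_sat Q (tuples Us) <= s ^ (length Us - 1).
Proof.
  revert d Q. induction Us as [|U Us IH]; intros d Q HU Hd HQ; simpl in Hd; [lia|].
  destruct (HU U (or_introl eq_refl)) as [HUlen HUnd].
  assert (HUs : forall U', In U' Us -> length U' = s /\ NoDup U') by (intros; apply HU; right; auto).
  simpl tuples. rewrite count_sat_flat_map.
  rewrite (map_ext _ (fun x => count_sat (fun t => Q (x :: t)) (tuples Us))).
  2:{ intro x. unfold count_sat, filter_sat. rewrite filter_map_swap, length_map. reflexivity. }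
  simpl length. replace (S (length Us) - 1) with (length Us) by lia.
  destruct d as [|d].
  - rewrite (list_sum_count_sat_comm (fun x t => Q (x :: t))).
    rewrite <- (length_tuples Us s) by (intros; apply HUs; auto).
    replace (length (tuples Us)) with (length (tuples Us) * 1) by lia.
    apply list_sum_map_le_mul. intros t Ht. apply count_sat_le_1; auto.
    intros x y Hx Hy HQx HQy.
    assert (E : x :: t = y :: t) by (apply HQ; auto using in_tuples_cons; intros [|i] Hi; simpl; auto; lia).
    injection E; auto.
  - destruct (length Us) as [|k] eqn:Ek; [lia|].
    rewrite Nat.pow_succ_r', <- HUlen at 1. apply list_sum_map_le_mul.
    intros x Hx. replace k with (S k - 1) by lia. apply (IH d); auto; [lia|].
    intros t t' Ht Ht' Hag HQt HQt'.
    assert (E : x :: t = x :: t')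
      by (apply HQ; auto using in_tuples_cons; intros [|i] Hi; simpl; auto; apply Hag; lia).
    injection E; auto.
Qed.

Lemma tuples_not_covered Us s (pieces : list (nat * (list X -> Prop))) :
  (forall U, In U Us -> length U = s /\ NoDup U) -> length pieces < s ->
  (forall d Q, In (d, Q) pieces -> d < length Us /\ single_on_lines Us d Q) ->
  exists t, In t (tuples Us) /\ forall d Q, In (d, Q) pieces -> ~ Q t.
Proof.
  intros HU Hs Hpieces. apply NNPP. intro Hno.
  assert (Hcov : forall t, In t (tuples Us) -> exists b, In b pieces /\ snd b t).
  { intros t Ht. apply NNPP. intro Hnt. apply Hno. exists t. split; auto.
    intros d Q Hin HQ. apply Hnt. exists (d, Q). auto. }
  pose proof (length_le_sum_count_sat _ _ _ Hcov) as Hunion.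
  rewrite (length_tuples Us s) in Hunion by (intros; apply HU; auto).
  assert (Hbound : list_sum (map (fun b => count_sat (snd b) (tuples Us)) pieces)
                   <= length pieces * s ^ (length Us - 1)).
  { apply list_sum_map_le_mul. intros [d Q] Hin. destruct (Hpieces d Q Hin).
    apply (count_sat_single_on_lines Us s d Q); auto. }
  destruct pieces as [|[d Q] pieces]; simpl in Hunion, Hbound.
  - assert (0 < s ^ length Us) by (apply Nat.neq_0_lt_0, Nat.pow_nonzero; lia). lia.
  - destruct (Hpieces d Q (or_introl eq_refl)) as [Hd _].
    destruct (length Us) as [|k]; [lia|]. simpl in Hunion, Hbound.
    replace (k - 0) with k in Hbound by lia. simpl in Hs.
    assert (0 < s ^ k) by (apply Nat.neq_0_lt_0, Nat.pow_nonzero; lia).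
    generalize dependent (s ^ k). intros. nia.
Qed.

End Tuples.

(** * Permutations, subgroups and cosets *)

Section Permutations.
Variable Omega : Type.
Local Notation perm := (perm Omega).
Local Notation pset := (pset Omega).
Local Notation comp := (comp Omega).
Local Notation is_perm := (is_perm Omega).
Local Notation is_subgroup := (is_subgroup Omega).
Local Notation subset := (subset Omega).
Local Notation index_le := (index_le Omega).

(* An unspecified function when [f] is not a bijection. *)
Definition pinv (f : perm) : perm :=
  epsilon (inhabits idp) (fun g => (forall x, g (f x) = x) /\ (forall x, f (g x) = x)).

Lemma pinv_spec f : is_perm f -> (forall x, pinv f (f x) = x) /\ (forall x, f (pinv f x) = x).
Proof. intro Hf. exact (epsilon_spec _ _ Hf). Qed.

Lemma pinv_l f : is_perm f -> forall x, pinv f (f x) = x.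
Proof. intro Hf. apply (pinv_spec f Hf). Qed.

Lemma pinv_r f : is_perm f -> forall x, f (pinv f x) = x.
Proof. intro Hf. apply (pinv_spec f Hf). Qed.

Lemma perm_inj f : is_perm f -> forall x y, f x = f y -> x = y.
Proof. intros Hf x y E. rewrite <- (pinv_l f Hf x), <- (pinv_l f Hf y), E. reflexivity. Qed.

Lemma pinv_unique f g : is_perm f -> (forall x, g (f x) = x) -> g = pinv f.
Proof. intros Hf E. extensionality x. rewrite <- (pinv_r f Hf x) at 1. apply E. Qed.

Lemma is_perm_id : is_perm idp.
Proof. exists idp. split; reflexivity. Qed.

Lemma is_perm_comp f g : is_perm f -> is_perm g -> is_perm (comp f g).
Proof.
  intros Hf Hg. exists (comp (pinv g) (pinv f)). unfold comp. split; intro x.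
  - rewrite pinv_l by auto. apply pinv_l; auto.
  - rewrite pinv_r by auto. apply pinv_r; auto.
Qed.

Lemma is_perm_pinv f : is_perm f -> is_perm (pinv f).
Proof. intro Hf. exists f. split; intro x; [apply pinv_r|apply pinv_l]; auto. Qed.

Lemma pinv_id : pinv idp = idp.
Proof. symmetry. apply pinv_unique; [apply is_perm_id|reflexivity]. Qed.

Lemma pinv_pinv f : is_perm f -> pinv (pinv f) = f.
Proof. intro Hf. symmetry. apply pinv_unique; [apply is_perm_pinv; auto|apply pinv_r; auto]. Qed.

Lemma comp_assoc f g h : comp f (comp g h) = comp (comp f g) h.
Proof. reflexivity. Qed.

Lemma comp_id_r f : comp f idp = f.
Proof. reflexivity. Qed.

Lemma comp_pinv_l f : is_perm f -> comp (pinv f) f = idp.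
Proof. intro Hf. extensionality x. apply pinv_l; auto. Qed.

Lemma comp_pinv_r f : is_perm f -> comp f (pinv f) = idp.
Proof. intro Hf. extensionality x. apply pinv_r; auto. Qed.

Lemma comp_cancel_r f g s : is_perm s -> comp f s = comp g s -> f = g.
Proof.
  intros Hs E. rewrite <- (comp_id_r f), <- (comp_id_r g), <- (comp_pinv_r s Hs).
  rewrite !comp_assoc, E. reflexivity.
Qed.

Lemma pinv_comp f g : is_perm f -> is_perm g -> pinv (comp f g) = comp (pinv g) (pinv f).
Proof.
  intros Hf Hg. symmetry. apply pinv_unique; [apply is_perm_comp; auto|].
  intro x. unfold comp. rewrite pinv_l by auto. apply pinv_l; auto.
Qed.

Lemma subgroup_perm K f : is_subgroup K -> K f -> is_perm f.
Proof. intros [HK _] Hf. auto. Qed.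

Lemma subgroup_id K : is_subgroup K -> K idp.
Proof. intros [_ [HK _]]. exact HK. Qed.

Lemma subgroup_comp K f g : is_subgroup K -> K f -> K g -> K (comp f g).
Proof. intros [_ [_ [HK _]]]. auto. Qed.

Lemma subgroup_pinv K f : is_subgroup K -> K f -> K (pinv f).
Proof.
  intros HK Hf. destruct HK as [Hp [_ [_ Hinv]]]. destruct (Hinv f Hf) as [g [Hg [Hgf _]]].
  replace (pinv f) with g by (apply pinv_unique; auto). exact Hg.
Qed.

Lemma is_subgroupI K :
  (forall f, K f -> is_perm f) -> K idp -> (forall f g, K f -> K g -> K (comp f g)) ->
  (forall f, K f -> K (pinv f)) -> is_subgroup K.
Proof.
  intros Hp Hid Hcomp Hinv. repeat split; auto.
  intros f Hf. exists (pinv f). split; auto. split; [apply pinv_l|apply pinv_r]; auto.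
Qed.

Ltac perm_of_subgroup :=
  match goal with
  | HK : is_subgroup ?K, Hf : ?K ?f |- is_perm ?f => eapply subgroup_perm; [exact HK|exact Hf]
  end.

Lemma subgroup_pinv_comp K f g : is_subgroup K -> K f -> K g -> K (comp (pinv f) g).
Proof. intros HK Hf Hg. apply subgroup_comp; auto. apply subgroup_pinv; auto. Qed.

Lemma subgroup_commutator K a b : is_subgroup K -> K a -> K b -> K (comp (comp (comp a b) (pinv a)) (pinv b)).
Proof.
  intros HK Ha Hb. apply subgroup_comp; [auto| |apply subgroup_pinv; auto].
  apply subgroup_comp; [auto|apply subgroup_comp; auto|apply subgroup_pinv; auto].
Qed.

Lemma commute_of_commutator_idp s d :
  is_perm s -> is_perm d -> comp (comp (comp (pinv d) s) d) (pinv s) = idp -> comp s d = comp d s.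
Proof.
  intros Hs Hd E. apply (comp_cancel_r _ _ (pinv s)); [apply is_perm_pinv; auto|].
  extensionality w. unfold comp. rewrite (pinv_r s Hs w).
  apply (perm_inj (pinv d) (is_perm_pinv d Hd)). rewrite pinv_l by auto.
  exact (f_equal (fun k => k w) E).
Qed.

Definition in_coset (c : perm) (K : pset) (x : perm) : Prop := exists s, K s /\ x = comp c s.

Lemma in_coset_refl c K : is_subgroup K -> in_coset c K c.
Proof. intro HK. exists idp. split; [apply subgroup_id; auto|reflexivity]. Qed.

Lemma in_coset_iff c K x : is_perm c -> in_coset c K x <-> K (comp (pinv c) x).
Proof.
  intro Hc. split.
  - intros [s [Hs ->]]. rewrite comp_assoc, comp_pinv_l by auto. exact Hs.
  - intro Hx. exists (comp (pinv c) x). split; auto. rewrite comp_assoc, comp_pinv_r by auto. reflexivity.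
Qed.

Lemma in_coset_sym c K x : is_subgroup K -> in_coset c K x -> in_coset x K c.
Proof.
  intros HK [s [Hs ->]]. exists (pinv s). split; [apply subgroup_pinv; auto|].
  rewrite <- comp_assoc, comp_pinv_r by perm_of_subgroup. reflexivity.
Qed.

Lemma in_coset_trans a b c K : is_subgroup K -> in_coset a K b -> in_coset b K c -> in_coset a K c.
Proof.
  intros HK [s [Hs ->]] [t [Ht ->]]. exists (comp s t). split; [apply subgroup_comp; auto|reflexivity].
Qed.

Lemma in_coset_sub c K K' x : subset K K' -> in_coset c K x -> in_coset c K' x.
Proof. intros HK [s [Hs ->]]. exists s. auto. Qed.

Lemma in_coset_comp_l g a K b : in_coset a K b -> in_coset (comp g a) K (comp g b).
Proof. intros [s [Hs ->]]. exists s. auto. Qed.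

Lemma in_coset_cancel_l g a K b : is_perm g -> in_coset (comp g a) K (comp g b) -> in_coset a K b.
Proof.
  intros Hg [s [Hs E]]. exists s. split; auto.
  extensionality w. apply (perm_inj g Hg). exact (f_equal (fun k => k w) E).
Qed.

Lemma conj_cancel_l g x : is_perm g -> comp (comp (pinv g) (comp (comp g x) (pinv g))) g = x.
Proof. intro Hg. extensionality w. unfold comp. rewrite pinv_l, pinv_l; auto. Qed.

Lemma conj_cancel_r g x : is_perm g -> comp (comp g (comp (comp (pinv g) x) g)) (pinv g) = x.
Proof. intro Hg. extensionality w. unfold comp. rewrite pinv_r, pinv_r; auto. Qed.

Definition pset_inter (A B : pset) : pset := fun g => A g /\ B g.

Definition inter_all (R : pset) (Ks : list pset) : pset := fun g => R g /\ forall K, In K Ks -> K g.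

Definition centralizer (K : pset) (d : perm) : pset := fun s => K s /\ comp s d = comp d s.

Lemma is_subgroup_inter A B : is_subgroup A -> is_subgroup B -> is_subgroup (pset_inter A B).
Proof.
  intros HA HB. apply is_subgroupI.
  - intros f [Hf _]. perm_of_subgroup.
  - split; apply subgroup_id; auto.
  - intros f g [HfA HfB] [HgA HgB]. split; apply subgroup_comp; auto.
  - intros f [HfA HfB]. split; apply subgroup_pinv; auto.
Qed.

Lemma is_subgroup_inter_all R Ks :
  is_subgroup R -> (forall K, In K Ks -> is_subgroup K) -> is_subgroup (inter_all R Ks).
Proof.
  intros HR HKs. apply is_subgroupI.
  - intros f [Hf _]. perm_of_subgroup.
  - split; [apply subgroup_id; auto|]. intros K HK. apply (subgroup_id K); auto.
  - intros f g [HfR HfK] [HgR HgK]. split; [apply subgroup_comp; auto|].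
    intros K HK. apply (subgroup_comp K); [apply HKs|apply HfK|apply HgK]; auto.
  - intros f [HfR HfK]. split; [apply subgroup_pinv; auto|].
    intros K HK. apply (subgroup_pinv K); [apply HKs|apply HfK]; auto.
Qed.

Lemma is_subgroup_trivial : is_subgroup (fun g => g = idp).
Proof.
  apply is_subgroupI.
  - intros f ->. apply is_perm_id.
  - reflexivity.
  - intros f g -> ->. reflexivity.
  - intros f ->. apply pinv_id.
Qed.

Lemma Rist_perm G Sigma g : is_subgroup G -> Rist Omega G Sigma g -> is_perm g.
Proof. intros HG [Hg _]. perm_of_subgroup. Qed.

Lemma Rist_maps_in G Sigma g : is_subgroup G -> Rist Omega G Sigma g -> forall w, Sigma w -> Sigma (g w).
Proof.
  intros HG Hg w Hw. apply NNPP. intro Hout. assert (E := proj2 Hg _ Hout).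
  apply (perm_inj g (Rist_perm G Sigma g HG Hg)) in E. rewrite E in Hout. contradiction.
Qed.

Lemma is_subgroup_Rist G Sigma : is_subgroup G -> is_subgroup (Rist Omega G Sigma).
Proof.
  intro HG. apply is_subgroupI.
  - intros f Hf. apply (Rist_perm G Sigma); auto.
  - split; [apply subgroup_id; auto|reflexivity].
  - intros f g [Hf Hfo] [Hg Hgo]. split; [apply subgroup_comp; auto|].
    intros x Hx. unfold comp. rewrite Hgo, Hfo; auto.
  - intros f [Hf Hfo]. split; [apply subgroup_pinv; auto|].
    intros x Hx. rewrite <- (Hfo x Hx) at 1. apply pinv_l. perm_of_subgroup.
Qed.

Lemma is_subgroup_centralizer K d : is_subgroup K -> is_subgroup (centralizer K d).
Proof.
  intro HK. apply is_subgroupI.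
  - intros f [Hf _]. perm_of_subgroup.
  - split; [apply subgroup_id; auto|reflexivity].
  - intros f g [Hf Efd] [Hg Egd]. split; [apply subgroup_comp; auto|].
    rewrite <- comp_assoc, Egd, comp_assoc, Efd. reflexivity.
  - intros f [Hf Efd]. assert (Hfp : is_perm f) by perm_of_subgroup.
    split; [apply subgroup_pinv; auto|].
    extensionality w. apply (perm_inj f Hfp). unfold comp.
    rewrite pinv_r by auto. change (d w = comp f d (pinv f w)). rewrite Efd. unfold comp.
    rewrite pinv_r; auto.
Qed.

Lemma conj_set_iff g N x :
  is_perm g -> conj_set Omega g N x <-> N (comp (comp (pinv g) x) g).
Proof.
  intro Hg. split.
  - intros [h [Hh E]]. rewrite <- comp_assoc, E, comp_assoc, comp_pinv_l; auto.
  - intro Hx. exists (comp (comp (pinv g) x) g). split; auto.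
    rewrite !comp_assoc, comp_pinv_r; auto.
Qed.

Lemma is_subgroup_normalizer K N :
  is_subgroup K -> (forall f, N f -> is_perm f) -> is_subgroup (normalizer Omega K N).
Proof.
  intros HK HN.
  assert (Hiff : forall g, K g -> normalizer Omega K N g <->
                   forall x, N (comp (comp (pinv g) x) g) <-> N x).
  { intros g Hg. unfold normalizer. split.
    - intros [_ Hn] x. rewrite <- conj_set_iff by perm_of_subgroup. apply Hn.
    - intros Hn. split; auto. intro x. rewrite conj_set_iff by perm_of_subgroup. apply Hn. }
  apply is_subgroupI.
  - intros f [Hf _]. perm_of_subgroup.
  - apply Hiff; [apply subgroup_id; auto|]. intro x. rewrite pinv_id. reflexivity.
  - intros f g Hf Hg. assert (HfK := proj1 Hf). assert (HgK := proj1 Hg).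
    assert (Hfp : is_perm f) by perm_of_subgroup. assert (Hgp : is_perm g) by perm_of_subgroup.
    pose proof (proj1 (Hiff f HfK) Hf) as Hfn. pose proof (proj1 (Hiff g HgK) Hg) as Hgn.
    apply Hiff; [apply subgroup_comp; auto|]. intro x. rewrite pinv_comp by auto.
    change (N (comp (comp (pinv g) (comp (comp (pinv f) x) f)) g) <-> N x).
    rewrite Hgn. apply Hfn.
  - intros f Hf. assert (HfK := proj1 Hf). assert (Hfp : is_perm f) by perm_of_subgroup.
    pose proof (proj1 (Hiff f HfK) Hf) as Hfn. apply Hiff; [apply subgroup_pinv; auto|]. intro x.
    rewrite <- Hfn, pinv_pinv by auto.
    change (N (comp (comp (comp (pinv f) f) x) (comp (pinv f) f)) <-> N x).
    rewrite comp_pinv_l by auto. reflexivity.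
Qed.

Lemma Rist_pinv_fix G Sigma y : is_subgroup G -> Rist Omega G Sigma y -> forall w, ~ Sigma w -> pinv y w = w.
Proof.
  intros HG Hy w Hw. rewrite <- (proj2 Hy w Hw) at 1. apply pinv_l. apply (Rist_perm G Sigma); auto.
Qed.

Lemma pinv_agree_Rist G Sigma k y :
  is_subgroup G -> is_perm k -> Rist Omega G Sigma y -> (forall w, Sigma w -> k w = y w) ->
  forall w, Sigma w -> pinv k w = pinv y w.
Proof.
  intros HG Hk Hy Hky w Hw. assert (HRS := is_subgroup_Rist G Sigma HG).
  assert (Hyp : is_perm y) by perm_of_subgroup.
  apply (perm_inj k Hk). rewrite pinv_r, Hky, pinv_r; auto.
  apply (Rist_maps_in G Sigma); auto. apply subgroup_pinv; auto.
Qed.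

Lemma conj_eq_of_agree G Sigma e y h :
  is_subgroup G -> is_perm e -> Rist Omega G Sigma y -> (forall w, Sigma w -> e w = y w) ->
  Rist Omega G Sigma h -> comp (comp e h) (pinv e) = comp (comp y h) (pinv y).
Proof.
  intros HG He Hy Hey Hh.
  assert (Hyp : is_perm y) by (apply (Rist_perm G Sigma); auto).
  assert (HRS := is_subgroup_Rist G Sigma HG).
  extensionality w. unfold comp. destruct (classic (Sigma w)) as [Hw|Hw].
  - assert (Hv : Sigma (pinv y w)) by (apply (Rist_maps_in G Sigma); auto; apply subgroup_pinv; auto).
    rewrite (pinv_agree_Rist G Sigma e y), Hey; auto. apply (Rist_maps_in G Sigma); auto.
  - assert (Hz : ~ Sigma (pinv e w)).
    { intro Hz. apply Hw. rewrite <- (pinv_r e He w), Hey; auto. apply (Rist_maps_in G Sigma); auto. }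
    rewrite (proj2 Hh _ Hz), pinv_r, (Rist_pinv_fix G Sigma y HG Hy w Hw), (proj2 Hh _ Hw), (proj2 Hy _ Hw); auto.
Qed.

Lemma commutator_eq_of_agree G Sigma (C : Omega -> Prop) e f u v :
  is_subgroup G -> is_perm e -> is_perm f -> Rist Omega G Sigma u -> Rist Omega G Sigma v ->
  (forall w, Sigma w -> e w = u w) -> (forall w, Sigma w -> f w = v w) ->
  (forall w, C w -> ~ Sigma w) -> (forall w, ~ Sigma w -> ~ C w -> e w = w) -> (forall w, C w -> f w = w) ->
  comp (comp (comp e f) (pinv e)) (pinv f) = comp (comp (comp u v) (pinv u)) (pinv v).
Proof.
  intros HG He Hf Hu Hv Heu Hfv HC He_fix Hf_fix.
  assert (HRS := is_subgroup_Rist G Sigma HG).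
  assert (Hup : is_perm u) by perm_of_subgroup. assert (Hvp : is_perm v) by perm_of_subgroup.
  extensionality w. unfold comp. destruct (classic (Sigma w)) as [Hw|Hw].
  - assert (Hw1 : Sigma (pinv v w)) by (apply (Rist_maps_in G Sigma); auto; apply subgroup_pinv; auto).
    assert (Hw2 : Sigma (pinv u (pinv v w))) by (apply (Rist_maps_in G Sigma); auto; apply subgroup_pinv; auto).
    rewrite (pinv_agree_Rist G Sigma f v), (pinv_agree_Rist G Sigma e u), Hfv, Heu; auto.
    apply (Rist_maps_in G Sigma); auto.
  - rewrite (Rist_pinv_fix G Sigma v HG Hv w Hw), (Rist_pinv_fix G Sigma u HG Hu w Hw),
            (proj2 Hv _ Hw), (proj2 Hu _ Hw).
    set (w1 := pinv f w). assert (Hfw1 : f w1 = w) by (apply pinv_r; auto).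
    assert (Hw1 : ~ Sigma w1)
      by (intro H1; apply Hw; rewrite <- Hfw1, Hfv; auto; apply (Rist_maps_in G Sigma); auto).
    set (w2 := pinv e w1). assert (Hew2 : e w2 = w1) by (apply pinv_r; auto).
    assert (Hw2 : ~ Sigma w2)
      by (intro H2; apply Hw1; rewrite <- Hew2, Heu; auto; apply (Rist_maps_in G Sigma); auto).
    destruct (classic (C w1)) as [HC1|HC1].
    + assert (Ew : w = w1) by (rewrite <- Hfw1; apply Hf_fix; auto).
      destruct (classic (C w2)) as [HC2|HC2].
      * rewrite Hf_fix, Hew2; auto.
      * exfalso. rewrite He_fix in Hew2 by auto. subst w2. rewrite Hew2 in HC2. contradiction.
    + assert (E2 : w2 = w1) by (apply (perm_inj e He); rewrite Hew2; symmetry; apply He_fix; auto).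
      rewrite E2, Hfw1. apply He_fix; auto. intro HCw. apply HC1.
      replace w1 with w; auto. apply (perm_inj f Hf). rewrite Hfw1, Hf_fix; auto.
Qed.

Lemma FC_le_of_index_centralizer M K d :
  is_subgroup K -> K d -> index_le K (centralizer K d) M -> FC_le Omega M K d.
Proof.
  intros HK Hd [l [Hl [HlK Hcov]]]. split; auto.
  exists (map (fun t => comp (comp t d) (pinv t)) l). split; [rewrite length_map; auto|].
  intros y [k [Hk Eyk]]. destruct (Hcov k Hk) as [t [s [Ht [[Hs Esd] ->]]]].
  apply in_map_iff. exists t. split; auto.
  assert (Htp : is_perm t) by (apply HlK in Ht; perm_of_subgroup).
  assert (Hsp : is_perm s) by perm_of_subgroup.
  assert (E : comp y t = comp t d).
  { apply (comp_cancel_r _ _ s Hsp). change (comp y (comp t s) = comp t (comp d s)).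
    rewrite <- Esd. exact Eyk. }
  rewrite <- E, <- comp_assoc, comp_pinv_r by auto. reflexivity.
Qed.

Lemma index_le_sub R S S' m : subset S S' -> index_le R S m -> index_le R S' m.
Proof.
  intros HS [l [Hl [HlR Hcov]]]. exists l. repeat split; auto.
  intros g Hg. destruct (Hcov g Hg) as [t [s [Ht [Hs E]]]]. exists t, s. auto.
Qed.

Lemma index_le_weaken R S m m' : m <= m' -> index_le R S m -> index_le R S m'.
Proof. intros Hm [l [Hl Hrest]]. exists l. split; [lia|auto]. Qed.

Lemma index_le_inter R A B a b :
  is_subgroup R -> is_subgroup A -> is_subgroup B ->
  index_le R A a -> index_le R B b -> index_le R (pset_inter A B) (a * b).
Proof.
  intros HR HA HB [la [Hla [HlaR HcovA]]] [lb [Hlb [HlbR HcovB]]].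
  set (meets := fun st : perm * perm => exists g, R g /\ in_coset (fst st) A g /\ in_coset (snd st) B g).
  destruct (choice_on meets (fun st u => R u /\ in_coset (fst st) A u /\ in_coset (snd st) B u) idp)
    as [u Hu]; [auto|].
  set (pairs := filter_sat meets (list_prod la lb)).
  assert (Hpairs : forall st, In st pairs <-> In st (list_prod la lb) /\ meets st) by apply in_filter_sat.
  exists (map u pairs). split; [|split].
  - rewrite length_map. eapply Nat.le_trans; [apply length_filter_sat_le|]. rewrite length_prod. nia.
  - intros t Ht. apply in_map_iff in Ht as [st [<- Hst]]. apply Hu, Hpairs, Hst.
  - intros g Hg. destruct (HcovA g Hg) as [s [x [Hs [Hx Egs]]]].
    destruct (HcovB g Hg) as [t [y [Ht [Hy Egt]]]].
    assert (Hmeet : meets (s, t)) by (exists g; repeat split; [auto|exists x|exists y]; auto).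
    destruct (Hu (s, t) Hmeet) as [Hu_R [HuA HuB]]. simpl in HuA, HuB.
    assert (Hup : is_perm (u (s, t))) by perm_of_subgroup.
    exists (u (s, t)), (comp (pinv (u (s, t))) g). split; [|split].
    + apply in_map. apply Hpairs. split; auto. apply in_prod; auto.
    + split; apply in_coset_iff; auto; eapply in_coset_trans; eauto using in_coset_sym.
      * exists x. auto.
      * exists y. auto.
    + rewrite comp_assoc, comp_pinv_r; auto.
Qed.

Lemma index_le_trans R D K a b :
  is_subgroup R -> subset D R -> index_le R D a -> index_le D (pset_inter K D) b ->
  index_le R K (a * b).
Proof.
  intros HR HDR [la [Hla [HlaR HcovD]]] [lb [Hlb [HlbD HcovK]]].
  exists (map (fun uv => comp (fst uv) (snd uv)) (list_prod la lb)). split; [|split].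
  - rewrite length_map, length_prod. nia.
  - intros t Ht. apply in_map_iff in Ht as [[u v] [<- Huv]]. apply in_prod_iff in Huv as [Hu Hv].
    apply subgroup_comp; auto.
  - intros g Hg. destruct (HcovD g Hg) as [u [d [Hu [Hd ->]]]].
    destruct (HcovK d Hd) as [v [k [Hv [[Hk _] ->]]]].
    exists (comp u v), k. split; [|split; auto].
    apply in_map_iff. exists (u, v). split; auto. apply in_prod; auto.
Qed.

Lemma index_le_inter_all R Ks :
  is_subgroup R -> (forall K, In K Ks -> is_subgroup K /\ exists m, index_le R K m) ->
  exists N, index_le R (inter_all R Ks) N.
Proof.
  intro HR. induction Ks as [|K Ks IH]; intro HKs.
  - exists 1, [idp]. split; [auto|split].
    + intros t [<-|[]]. apply subgroup_id; auto.
    + intros g Hg. exists idp, g. split; [left; auto|split; [|reflexivity]].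
      split; [auto|intros K []].
  - destruct IH as [N HN]; [intros K' HK'; apply HKs; right; auto|].
    destruct (HKs K (or_introl eq_refl)) as [HK [m Hm]].
    exists (m * N). apply (index_le_sub _ (pset_inter K (inter_all R Ks))); [|apply index_le_inter; auto].
    + intros g [HgK [HgR HgKs]]. split; auto. intros K' [<-|HK']; [auto|apply HgKs; auto].
    + apply is_subgroup_inter_all; auto. intros K' HK'. apply HKs. right; auto.
Qed.

(** * Neumann's covering lemma *)

Definition coset_separated (K : pset) (l : list perm) : Prop :=
  NoDup l /\ forall a b, In a l -> In b l -> in_coset a K b -> a = b.

Lemma exists_coset_separated R K m :
  is_subgroup K -> ~ index_le R K m ->
  exists l, length l = S m /\ (forall g, In g l -> R g) /\ coset_separated K l.
Proof.
  intros HK Hnot.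
  enough (Hk : forall k, k <= S m ->
                 exists l, length l = k /\ (forall g, In g l -> R g) /\ coset_separated K l)
    by (apply Hk; lia).
  induction k as [|k IH]; intro Hk.
  - exists []. split; [reflexivity|split; [intros g []|split; [constructor|intros a b []]]].
  - destruct IH as [l [Hl [HlR [Hnd Hsep]]]]; [lia|].
    destruct (classic (exists g, R g /\ forall t, In t l -> ~ in_coset t K g)) as [[g [Hg Hnew]]|Hnone].
    + exists (g :: l). split; [simpl; auto|split; [intros g' [<-|Hg']; auto|split]].
      * constructor; auto. intro Hin. apply (Hnew g Hin). apply in_coset_refl; auto.
      * intros a b [<-|Ha] [<-|Hb] Hab; auto.
        -- exfalso. apply (Hnew b Hb). apply in_coset_sym; auto.
        -- exfalso. apply (Hnew a Ha Hab).
    + exfalso. apply Hnot. exists l. split; [lia|split; auto].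
      intros g Hg. apply NNPP. intro Hg'. apply Hnone. exists g. split; auto.
      intros t Ht [s [Hs E]]. apply Hg'. exists t, s. auto.
Qed.

Lemma exists_transversal D l :
  is_subgroup D ->
  exists X, coset_separated D X /\ incl X l /\ forall t, In t l -> exists x, In x X /\ in_coset x D t.
Proof.
  intro HD. induction l as [|a l IH].
  - exists []. split; [split; [constructor|intros a b []]|split; [intros x []|intros t []]].
  - destruct IH as [X [[Hnd Hsep] [HXl HXcov]]].
    destruct (classic (exists x, In x X /\ in_coset x D a)) as [Hold|Hnew].
    + exists X. split; [split; auto|split; [intros x Hx; right; auto|]].
      intros t [<-|Ht]; auto.
    + exists (a :: X). split; [split|split].
      * constructor; [|auto]. intro Ha. apply Hnew. exists a. split; auto. apply in_coset_refl; auto.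
      * intros x y [<-|Hx] [<-|Hy] Hxy; auto; exfalso; apply Hnew.
        -- exists y. split; auto. apply in_coset_sym; auto.
        -- exists x. auto.
      * intros x [<-|Hx]; [left; auto|right; auto].
      * intros t [<-|Ht].
        -- exists a. split; [left; auto|apply in_coset_refl; auto].
        -- destruct (HXcov t Ht) as [x [Hx Hxt]]. exists x. split; [right|]; auto.
Qed.

Lemma coset_separated_translate K D gs g g' s s' :
  is_subgroup K -> subset D K -> coset_separated K gs -> (forall g0, In g0 gs -> is_perm g0) ->
  In g gs -> In g' gs -> K s -> K s' -> in_coset (comp g s) D (comp g' s') ->
  g = g' /\ in_coset s D s'.
Proof.
  intros HK HDK [_ Hsep] Hperm Hg Hg' Hs Hs' HD.
  assert (Hgg : g = g').
  { apply Hsep; auto. apply (in_coset_trans _ (comp g s) _ _ HK); [exists s; auto|].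
    apply (in_coset_trans _ (comp g' s') _ _ HK); [apply (in_coset_sub _ D); auto|].
    apply in_coset_sym; auto. exists s'. auto. }
  subst g'. split; auto. apply (in_coset_cancel_l g); auto.
Qed.

(* With [m+1] elements [g] of [R] in distinct cosets of [K], the map sending [(g, x)] to the
   representative of [g c^-1 x] is injective from pairs with [x] in [X ∩ c K] into [X]. *)
Lemma count_sat_in_coset_le R D K c m X :
  is_subgroup R -> is_subgroup D -> is_subgroup K -> subset D K -> subset K R -> R c ->
  ~ index_le R K m -> coset_separated D X -> (forall x, In x X -> R x) ->
  (forall g, R g -> exists x, In x X /\ in_coset x D g) ->
  count_sat (in_coset c K) X * S m <= length X.
Proof.
  intros HR HD HK HDK HKR Hc Hnot [HXnd HXsep] HXR HXcov.
  destruct (choice_on R (fun g x => In x X /\ in_coset x D g) idp HXcov) as [rep Hrep].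
  destruct (exists_coset_separated R K m HK Hnot) as [gs [Hgs [HgsR Hgssep]]].
  set (Xc := filter_sat (in_coset c K) X).
  assert (HXc : forall x, In x Xc <-> In x X /\ in_coset c K x) by apply in_filter_sat.
  assert (Hcp : is_perm c) by perm_of_subgroup.
  set (img := fun gx : perm * perm => comp (comp (fst gx) (pinv c)) (snd gx)).
  assert (Himg : forall g x, In g gs -> In x Xc -> exists s, K s /\ x = comp c s /\ img (g, x) = comp g s).
  { intros g x Hg Hx. apply HXc in Hx as [_ [s [Hs ->]]]. exists s. split; [auto|split; auto].
    unfold img. simpl. rewrite comp_assoc. change (comp g (comp (comp (pinv c) c) s) = comp g s).
    rewrite comp_pinv_l; auto. }
  assert (HimgR : forall gx, In gx (list_prod gs Xc) -> R (img gx)).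
  { intros [g x] Hgx. apply in_prod_iff in Hgx as [Hg Hx]. destruct (Himg g x Hg Hx) as [s [Hs [_ ->]]].
    apply subgroup_comp; auto. }
  assert (Hnd : NoDup (map (fun gx => rep (img gx)) (list_prod gs Xc))).
  { apply NoDup_map_NoDup_ForallPairs.
    - intros [g x] [g' x'] Hgx Hgx' E.
      pose proof (HimgR _ Hgx) as HR1. pose proof (HimgR _ Hgx') as HR2.
      apply in_prod_iff in Hgx as [Hg Hx]. apply in_prod_iff in Hgx' as [Hg' Hx'].
      destruct (Himg g x Hg Hx) as [s [Hs [Ex Ei]]]. destruct (Himg g' x' Hg' Hx') as [s' [Hs' [Ex' Ei']]].
      assert (HgsD : in_coset (comp g s) D (comp g' s')).
      { rewrite <- Ei, <- Ei'. apply (in_coset_trans _ (rep (img (g, x))) _ _ HD).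
        - apply in_coset_sym; auto. apply Hrep; auto.
        - rewrite E. apply Hrep; auto. }
      destruct (coset_separated_translate K D gs g g' s s') as [<- Hss']; auto.
      { intros g0 Hg0. apply HgsR in Hg0. perm_of_subgroup. }
      f_equal. apply HXsep; [apply HXc, Hx|apply HXc, Hx'|]. rewrite Ex, Ex'.
      apply in_coset_comp_l. exact Hss'.
    - apply NoDup_list_prod; [apply Hgssep|apply NoDup_filter; auto]. }
  assert (Hincl : incl (map (fun gx => rep (img gx)) (list_prod gs Xc)) X).
  { intros y Hy. apply in_map_iff in Hy as [gx [<- Hgx]]. apply Hrep, HimgR, Hgx. }
  pose proof (NoDup_incl_length Hnd Hincl) as Hlen.
  rewrite length_map, length_prod, Hgs in Hlen. unfold count_sat. fold Xc. lia.
Qed.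

(* Counting cosets of [D]: every [c K] from [F] contains at most a fraction [1/(m+1)] of them. *)
Lemma finite_index_cosets_not_cover R D F m N :
  is_subgroup R -> is_subgroup D -> subset D R -> index_le R D N ->
  (forall c K, In (c, K) F -> is_subgroup K /\ subset D K /\ subset K R /\ R c /\ ~ index_le R K m) ->
  length F <= m -> ~ (forall g, R g -> exists c K, In (c, K) F /\ in_coset c K g).
Proof.
  intros HR HD HDR [l [_ [HlR HlD]]] HF HFm Hcov.
  destruct (exists_transversal D l HD) as [X [HXsep [HXl HXl_cov]]].
  assert (HXR : forall x, In x X -> R x) by (intros x Hx; apply HlR, HXl, Hx).
  assert (HXcov : forall g, R g -> exists x, In x X /\ in_coset x D g).
  { intros g Hg. destruct (HlD g Hg) as [t [s [Ht [Hs ->]]]]. destruct (HXl_cov t Ht) as [x [Hx Hxt]].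
    exists x. split; auto. apply (in_coset_trans _ t _ _ HD); auto. exists s. auto. }
  assert (Hunion : length X <= list_sum (map (fun cK => count_sat (in_coset (fst cK) (snd cK)) X) F)).
  { apply length_le_sum_count_sat. intros x Hx.
    destruct (Hcov x (HXR x Hx)) as [c [K [HcK Hx']]]. exists (c, K). auto. }
  assert (Hpieces : list_sum (map (fun cK => count_sat (in_coset (fst cK) (snd cK)) X) F) * S m
                    <= length F * length X).
  { apply list_sum_map_mul_le. intros [c K] HcK. destruct (HF c K HcK) as [HK [HDK [HKR [Hc Hnot]]]].
    apply (count_sat_in_coset_le R D); auto. }
  assert (HX : 1 <= length X).
  { destruct (HXcov idp (subgroup_id R HR)) as [x [Hx _]]. destruct X; [contradiction|simpl; lia]. }
  nia.
Qed.

Lemma cosets_of_infinite_index_not_cover D K cs :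
  (forall m, ~ index_le D K m) -> (forall c, In c cs -> D c) ->
  exists y, D y /\ forall c, In c cs -> ~ in_coset c K y.
Proof.
  intros Hinf Hcs. apply NNPP. intro Hno. apply (Hinf (length cs)).
  exists cs. split; [auto|split; [auto|]].
  intros g Hg. apply NNPP. intro Hg'. apply Hno. exists g. split; auto.
  intros c Hc [s [Hs ->]]. apply Hg'. exists c, s. auto.
Qed.

(* Induction on the subgroups: an element [y] outside the cosets of [K] lets each [c K] be
   covered by the translates [c y^-1 c' K'] of the cosets of the other subgroups. *)
Lemma infinite_index_cosets_not_cover D Ks :
  is_subgroup D -> (forall K, In K Ks -> is_subgroup K /\ subset K D /\ forall m, ~ index_le D K m) ->
  forall L, (forall c K, In (c, K) L -> In K Ks /\ D c) ->
  ~ (forall g, D g -> exists c K, In (c, K) L /\ in_coset c K g).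
Proof.
  intro HD. induction Ks as [|K Ks IH]; intros HKs L HL Hcov.
  - destruct (Hcov idp (subgroup_id D HD)) as [c [K [HcK _]]]. apply (HL c K HcK).
  - destruct (HKs K (or_introl eq_refl)) as [HK [HKD HKinf]].
    set (sameK := fun cK : perm * pset => snd cK = K).
    set (La := filter_sat sameK L). set (Lb := filter_sat (fun cK => ~ sameK cK) L).
    assert (HLa : forall cK, In cK La <-> In cK L /\ sameK cK) by apply in_filter_sat.
    assert (HLb : forall cK, In cK Lb <-> In cK L /\ ~ sameK cK) by apply in_filter_sat.
    destruct (cosets_of_infinite_index_not_cover D K (map fst La) HKinf) as [y [Hy Hyout]].
    { intros t Ht. apply in_map_iff in Ht as [[c K'] [<- HcK]]. apply HLa in HcK as [HcK _].
      apply (HL c K' HcK). }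
    apply (IH (fun K' HK' => HKs K' (or_intror HK'))
              (Lb ++ flat_map (fun a => map (fun b => (comp (comp (fst a) (pinv y)) (fst b), snd b)) Lb) La)).
    + intros c K' HcK. apply in_app_iff in HcK as [HcK|HcK].
      * apply HLb in HcK as [HcK HnK].
        destruct (HL c K' HcK) as [[E|HK'] Hc]; [destruct HnK; symmetry; exact E|auto].
      * apply in_flat_map in HcK as [[ca Ka] [Ha HcK]]. apply in_map_iff in HcK as [[cb Kb] [E Hb]].
        injection E as <- <-. apply HLa in Ha as [Ha _]. apply HLb in Hb as [Hb HnK].
        destruct (HL cb Kb Hb) as [[E|HKb] Hcb]; [destruct HnK; symmetry; exact E|]. split; auto.
        simpl. apply subgroup_comp; [auto| |auto]. apply subgroup_comp; [auto| |apply subgroup_pinv; auto].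
        apply (HL ca Ka Ha).
    + intros g Hg. destruct (Hcov g Hg) as [c [K' [HcK Hgc]]].
      destruct (classic (K' = K)) as [->|HnK].
      * destruct (HL c K HcK) as [_ Hc]. destruct Hgc as [s [Hs ->]].
        assert (Hys : D (comp y s)) by (apply subgroup_comp; auto).
        destruct (Hcov _ Hys) as [c' [K' [HcK' [s' [Hs' Eys]]]]].
        destruct (classic (K' = K)) as [->|HnK'].
        -- exfalso. apply (Hyout c').
           { apply in_map_iff. exists (c', K). split; auto. apply HLa. split; auto. reflexivity. }
           exists (comp s' (pinv s)). split.
           ++ apply subgroup_comp; auto. apply subgroup_pinv; auto.
           ++ rewrite comp_assoc, <- Eys, <- comp_assoc, comp_pinv_r by perm_of_subgroup. reflexivity.
        -- exists (comp (comp c (pinv y)) c'), K'. split.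
           ++ apply in_app_iff. right. apply in_flat_map. exists (c, K).
              split; [apply HLa; split; auto; reflexivity|].
              apply in_map_iff. exists (c', K'). split; auto. apply HLb. auto.
           ++ exists s'. split; auto. rewrite <- comp_assoc, <- comp_assoc, <- Eys.
              rewrite (comp_assoc (pinv y) y s), comp_pinv_l by perm_of_subgroup. reflexivity.
      * exists c, K'. split; auto. apply in_app_iff. left. apply HLb. auto.
Qed.

(* If [x0] escapes the finite-index cosets, the translate [x0 D] is covered by cosets of
   subgroups of infinite index, and intersecting with [D] contradicts the previous lemma. *)
Lemma finite_index_cosets_cover R D N L :
  is_subgroup R -> is_subgroup D -> subset D R -> index_le R D N ->
  (forall c K, In (c, K) L ->
     is_subgroup K /\ subset K R /\ R c /\ ((exists m, index_le R K m) -> subset D K)) ->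
  (forall g, R g -> exists c K, In (c, K) L /\ in_coset c K g) ->
  forall g, R g -> exists c K, In (c, K) L /\ (exists m, index_le R K m) /\ in_coset c K g.
Proof.
  intros HR HD HDR HN HL Hcov x0 Hx0. apply NNPP. intro Hout.
  set (I := filter_sat (fun cK => ~ exists m, index_le R (snd cK) m) L).
  assert (HI : forall cK, In cK I <-> In cK L /\ ~ exists m, index_le R (snd cK) m) by apply in_filter_sat.
  set (meets := fun cK : perm * pset => exists d, D d /\ in_coset (fst cK) (snd cK) (comp x0 d)).
  destruct (choice_on meets (fun cK d => D d /\ in_coset (fst cK) (snd cK) (comp x0 d)) idp)
    as [d Hd]; [auto|].
  set (J := filter_sat meets I).
  assert (HJ : forall cK, In cK J <-> In cK I /\ meets cK) by apply in_filter_sat.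
  apply (infinite_index_cosets_not_cover D (map (fun cK => pset_inter (snd cK) D) I) HD)
    with (L := map (fun cK => (d cK, pset_inter (snd cK) D)) J).
  - intros K' HK'. apply in_map_iff in HK' as [[c K] [<- HcK]]. apply HI in HcK as [HcK Hinf].
    destruct (HL c K HcK) as [HK [HKR _]]. simpl.
    split; [apply is_subgroup_inter; auto|split; [intros g [_ Hg]; auto|]].
    intros m Hm. apply Hinf. exists (N * m). apply (index_le_trans R D); auto.
  - intros c' K' HcK'. apply in_map_iff in HcK' as [cK [E HcK]]. injection E as <- <-.
    apply HJ in HcK as [HcK Hmeets].
    split; [apply (in_map (fun cK => pset_inter (snd cK) D)); auto|apply (Hd cK Hmeets)].
  - intros g Hg. assert (Hx0g : R (comp x0 g)) by (apply subgroup_comp; auto).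
    destruct (Hcov _ Hx0g) as [c [K [HcK Hc]]]. destruct (HL c K HcK) as [HK [HKR [HcR HDK]]].
    destruct (classic (exists m, index_le R K m)) as [Hfin|Hinf].
    + exfalso. apply Hout. exists c, K. split; [auto|split; auto].
      apply (in_coset_trans _ (comp x0 g) _ _ HK); auto. exists (pinv g). split.
      * apply HDK; auto. apply subgroup_pinv; auto.
      * rewrite <- comp_assoc, comp_pinv_r by perm_of_subgroup. reflexivity.
    + assert (Hmeets : meets (c, K)) by (exists g; auto).
      destruct (Hd (c, K) Hmeets) as [HdD Hdc]. simpl in Hdc.
      exists (d (c, K)), (pset_inter K D). split.
      * apply in_map_iff. exists (c, K). split; auto. apply HJ. split; auto. apply HI. auto.
      * assert (Hdp : is_perm (d (c, K))) by perm_of_subgroup.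
        apply in_coset_iff; auto. split.
        -- apply in_coset_iff; auto. apply (in_coset_cancel_l x0); [perm_of_subgroup|].
           apply (in_coset_trans _ c _ _ HK); auto. apply in_coset_sym; auto.
        -- apply subgroup_comp; auto. apply subgroup_pinv; auto.
Qed.

Theorem cosets_not_cover R L :
  is_subgroup R -> (forall c K, In (c, K) L -> is_subgroup K /\ subset K R /\ R c) ->
  (forall c K, In (c, K) L -> ~ index_le R K (length L)) ->
  exists x, R x /\ forall c K, In (c, K) L -> ~ in_coset c K x.
Proof.
  intros HR HL Hlarge. apply NNPP. intro Hno.
  assert (Hcov : forall g, R g -> exists c K, In (c, K) L /\ in_coset c K g).
  { intros g Hg. apply NNPP. intro Hg'. apply Hno. exists g. split; auto.
    intros c K HcK Hc. apply Hg'. exists c, K. auto. }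
  set (F := filter_sat (fun cK => exists m, index_le R (snd cK) m) L).
  assert (HF : forall cK, In cK F <-> In cK L /\ exists m, index_le R (snd cK) m) by apply in_filter_sat.
  set (D := inter_all R (map snd F)).
  assert (HFsub : forall K, In K (map snd F) -> is_subgroup K /\ exists m, index_le R K m).
  { intros K HK. apply in_map_iff in HK as [[c K'] [<- HcK]]. apply HF in HcK as [HcK Hfin].
    split; auto. apply (HL c K' HcK). }
  assert (HD : is_subgroup D) by (apply is_subgroup_inter_all; auto; intros K HK; apply HFsub; auto).
  destruct (index_le_inter_all R (map snd F) HR HFsub) as [N HN].
  assert (HDR : subset D R) by (intros g Hg; exact (proj1 Hg)).
  assert (HDK : forall c K, In (c, K) F -> subset D K).
  { intros c K HcK g Hg. apply (proj2 Hg). apply in_map_iff. exists (c, K). auto. }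
  apply (finite_index_cosets_not_cover R D F (length L) N); auto.
  - intros c K HcK. pose proof (HDK c K HcK) as HDK'. apply HF in HcK as [HcK _].
    destruct (HL c K HcK) as [HK [HKR Hc]]. split; [|split; [|split; [|split]]]; auto.
    apply (Hlarge c K HcK).
  - apply length_filter_sat_le.
  - intros g Hg. destruct (finite_index_cosets_cover R D N L) with (g := g)
      as [c [K [HcK [Hfin Hc]]]]; auto.
    + intros c K HcK. destruct (HL c K HcK) as [HK [HKR Hc]]. split; [|split; [|split]]; auto.
      intro Hfin. apply (HDK c). apply HF. auto.
    + exists c, K. split; auto. apply HF. auto.
Qed.

Lemma exists_list_avoiding_cosets R L s M :
  is_subgroup R -> ~ index_le R (fun g => g = idp) M ->
  (forall c K, In (c, K) L -> is_subgroup K /\ subset K R /\ R c /\ ~ index_le R K M) ->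
  length L + s <= S M ->
  exists U, length U = s /\ NoDup U /\
    forall x, In x U -> R x /\ forall c K, In (c, K) L -> ~ in_coset c K x.
Proof.
  intros HR Hbig HL. induction s as [|s IH]; intro Hs.
  - exists []. split; [reflexivity|split; [constructor|intros x []]].
  - destruct IH as [U [HUlen [HUnd HU]]]; [lia|].
    set (L' := L ++ map (fun u => (u, fun g : perm => g = idp)) U).
    assert (HL'len : length L' <= M) by (unfold L'; rewrite length_app, length_map; lia).
    assert (HL' : forall c K, In (c, K) L' -> (is_subgroup K /\ subset K R /\ R c) /\ ~ index_le R K M).
    { intros c K HcK. apply in_app_iff in HcK as [HcK|HcK].
      - destruct (HL c K HcK) as [HK [HKR [Hc Hnot]]]. auto.
      - apply in_map_iff in HcK as [u [E Hu]]. injection E as <- <-.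
        split; auto. split; [apply is_subgroup_trivial|split; [intros g ->; apply subgroup_id; auto|]].
        apply HU; auto. }
    destruct (cosets_not_cover R L') as [x [Hx Hxout]]; [auto|intros c K HcK; apply HL'; auto|..].
    { intros c K HcK Hidx. apply (HL' c K HcK). apply (index_le_weaken _ _ _ _ HL'len Hidx). }
    assert (HxU : ~ In x U).
    { intro Hin. apply (Hxout x (fun g => g = idp)).
      - apply in_app_iff. right. apply in_map_iff. exists x. auto.
      - exists idp. auto. }
    exists (x :: U). split; [simpl; lia|split; [constructor; auto|]].
    intros y [<-|Hy]; [|apply HU; auto]. split; auto.
    intros c K HcK. apply Hxout. apply in_app_iff. auto.
Qed.

(** * Displacement configurations and block products *)

Section Configuration.
Variables (P : list perm) (Om : perm -> Omega -> Prop).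
Hypothesis HDC : displacement_configuration Omega P Om.
Variable G : pset.
Hypothesis HG : is_subgroup G.

Definition covered (w : Omega) : Prop := exists a, In a P /\ Om a w.

Section Displacement.
Variable p : perm.
Hypotheses (HpP : In p P) (Hp : is_perm p).
Local Notation B := (Om p).
Local Notation RB := (Rist Omega G B).

Lemma image_uncovered b : B b -> ~ covered (p b).
Proof. intros Hb [a [Ha Hab]]. exact (proj1 (proj2 (proj2 (proj2 HDC)) p HpP b Hb a Ha) Hab). Qed.

Lemma image2_uncovered b : B b -> ~ covered (p (p b)).
Proof. intros Hb [a [Ha Hab]]. exact (proj2 (proj2 (proj2 (proj2 HDC)) p HpP b Hb a Ha) Hab). Qed.

Lemma preimage_uncovered z : B (p z) -> ~ covered z.
Proof.
  intros Hz [a [Ha Haz]].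
  destruct (proj1 (proj2 (proj2 HDC)) p a HpP Ha) as [Hfix|Hout].
  - rewrite (Hfix z Haz) in Hz. apply (image_uncovered z Hz). exists p. rewrite Hfix; auto.
  - exact (Hout z Haz p HpP Hz).
Qed.

Definition restricts_to (g c : perm) : Prop :=
  is_perm g /\ (forall w, B w -> g w = c w) /\ (forall w, ~ covered w -> g w = w).

Section Conjugate.
Variables g c q : perm.
Hypotheses (Hg : restricts_to g c) (Hc : RB c) (Hq : comp p g = comp g q).

Let Hq_at w : p (g w) = g (q w) := f_equal (fun k => k w) Hq.

Lemma conj_on_block w : B w -> q w = p (c w).
Proof.
  intro Hw. destruct Hg as [Hgp [Hgc Hgo]]. apply (perm_inj g Hgp).
  rewrite <- Hq_at, Hgc, Hgo; auto. apply image_uncovered. apply (Rist_maps_in G B); auto.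
Qed.

Lemma conj_on_image b : B b -> q (p b) = p (p b).
Proof.
  intro Hb. destruct Hg as [Hgp [_ Hgo]]. apply (perm_inj g Hgp).
  rewrite <- Hq_at, (Hgo (p b)), (Hgo (p (p b))); auto using image_uncovered, image2_uncovered.
Qed.

Lemma conj_on_preimage w : B w -> q (pinv p (c w)) = w.
Proof.
  intro Hw. destruct Hg as [Hgp [Hgc Hgo]].
  assert (Hcw : B (c w)) by (apply (Rist_maps_in G B); auto).
  apply (perm_inj g Hgp). rewrite <- Hq_at, Hgo, pinv_r, Hgc; auto.
  apply preimage_uncovered. rewrite pinv_r; auto.
Qed.

End Conjugate.

Lemma conj_quotient_on_block g c q g' c' q' :
  restricts_to g c -> RB c -> comp p g = comp g q -> is_perm q ->
  restricts_to g' c' -> RB c' -> comp p g' = comp g' q' ->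
  forall w, B w -> comp q' (pinv q) w = pinv c' (c w).
Proof.
  intros Hg Hc Hq Hqp Hg' Hc' Hq' w Hw. unfold comp.
  assert (HRB := is_subgroup_Rist G B HG).
  assert (E : pinv q w = pinv p (c w)).
  { rewrite <- (conj_on_preimage g c q Hg Hc Hq w Hw) at 1. apply pinv_l; auto. }
  assert (Hw' : B (pinv c' (c w))).
  { apply (Rist_maps_in G B); auto; [apply subgroup_pinv; auto|apply (Rist_maps_in G B); auto]. }
  rewrite E, <- (conj_on_preimage g' c' q' Hg' Hc' Hq' _ Hw'), pinv_r; auto. perm_of_subgroup.
Qed.

Lemma normalizes_Rist_part Hj g c q g' c' q' :
  is_subgroup Hj ->
  restricts_to g c -> RB c -> comp p g = comp g q -> Hj q ->
  restricts_to g' c' -> RB c' -> comp p g' = comp g' q' -> Hj q' ->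
  normalizer Omega RB (pset_inter Hj RB) (comp (pinv c') c).
Proof.
  intros HHj Hg Hc Hq Hjq Hg' Hc' Hq' Hjq'.
  assert (HRB := is_subgroup_Rist G B HG).
  set (e := comp q' (pinv q)). set (y := comp (pinv c') c).
  assert (Hje : Hj e) by (apply subgroup_comp; auto; apply subgroup_pinv; auto).
  assert (Hep : is_perm e) by perm_of_subgroup.
  assert (Hy : RB y) by (apply subgroup_pinv_comp; auto).
  assert (Hyp : is_perm y) by perm_of_subgroup.
  assert (Hey : forall w, B w -> e w = y w).
  { intros w Hw. apply (conj_quotient_on_block g c q g'); auto. perm_of_subgroup. }
  (* on [RB], conjugating by [y] is conjugating by [e], which preserves [Hj] *)
  assert (Hconj : forall h, RB h -> comp (comp y h) (pinv y) = comp (comp e h) (pinv e)).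
  { intros h Hh. symmetry. apply (conj_eq_of_agree G B); auto. }
  split; auto. intro x. rewrite conj_set_iff by auto.
  set (h := comp (comp (pinv y) x) y).
  assert (Ex : RB h -> comp (comp e h) (pinv e) = x).
  { intro Hh. rewrite <- Hconj by auto. apply conj_cancel_r; auto. }
  split.
  - intros [Hjh Hh]. rewrite <- (Ex Hh). split.
    + apply subgroup_comp; [auto|apply subgroup_comp|apply subgroup_pinv]; auto.
    + rewrite <- Hconj by auto. apply subgroup_comp; [auto|apply subgroup_comp|apply subgroup_pinv]; auto.
  - intros [Hjx Hx]. assert (Hh : RB h) by (apply subgroup_comp; auto; apply subgroup_pinv_comp; auto).
    split; auto. rewrite <- (conj_cancel_l e h Hep), (Ex Hh).
    apply subgroup_comp; auto. apply subgroup_pinv_comp; auto.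
Qed.

Definition block_image (w : Omega) : Prop := exists b, B b /\ w = p b.

Lemma restricts_to_comp_Rist g c d : restricts_to g c -> RB d -> restricts_to (comp g d) (comp c d).
Proof.
  intros [Hgp [Hgc Hgo]] Hd. split; [apply is_perm_comp; [auto|apply (Rist_perm G B); auto]|split].
  - intros w Hw. apply Hgc. apply (Rist_maps_in G B); auto.
  - intros w Hw. unfold comp. rewrite (proj2 Hd w), Hgo; auto. intro HB. apply Hw. exists p. auto.
Qed.

Lemma conj_left_quotient_on_block g c q g2 c2 q2 :
  restricts_to g c -> RB c -> comp p g = comp g q -> is_perm q ->
  restricts_to g2 c2 -> RB c2 -> comp p g2 = comp g2 q2 ->
  forall w, B w -> comp (pinv q) q2 w = comp (pinv c) c2 w.
Proof.
  intros Hg Hc Hq Hqp Hg2 Hc2 Hq2 w Hw.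
  assert (HRB := is_subgroup_Rist G B HG). assert (Hcp : is_perm c) by perm_of_subgroup.
  assert (Hs : RB (comp (pinv c) c2)) by (apply subgroup_pinv_comp; auto).
  unfold comp. rewrite (conj_on_block g2 c2 q2); auto.
  apply (perm_inj q Hqp). rewrite pinv_r, (conj_on_block g c q), pinv_r; auto.
  exact (Rist_maps_in G B _ HG Hs w Hw).
Qed.

Lemma conj_left_quotient_on_image g c q g2 c2 q2 :
  restricts_to g c -> RB c -> comp p g = comp g q -> is_perm q ->
  restricts_to g2 c2 -> RB c2 -> comp p g2 = comp g2 q2 ->
  forall w, block_image w -> comp (pinv q) q2 w = w.
Proof.
  intros Hg Hc Hq Hqp Hg2 Hc2 Hq2 w [b [Hb ->]]. unfold comp.
  rewrite (conj_on_image g2 c2 q2), <- (conj_on_image g c q); auto. apply pinv_l; auto.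
Qed.

Lemma conj_quotient_fixes_outside g c q d q1 :
  restricts_to g c -> RB c -> comp p g = comp g q -> is_perm q ->
  RB d -> comp p (comp g d) = comp (comp g d) q1 ->
  forall w, ~ B w -> ~ block_image w -> comp q1 (pinv q) w = w.
Proof.
  intros Hg Hc Hq Hqp Hd Hq1 w Hw Hpw. unfold comp.
  set (z := pinv q w). assert (Hqz : q z = w) by (apply pinv_r; auto).
  assert (Hz : ~ B z).
  { intro Hz. apply Hpw. exists (c z). split; [apply (Rist_maps_in G B); auto|].
    rewrite <- Hqz. apply (conj_on_block g c q); auto. }
  destruct (restricts_to_comp_Rist g c d Hg Hd) as [Hgdp _]. apply (perm_inj _ Hgdp).
  change (comp (comp g d) q1 z = comp g d w). rewrite <- Hq1. unfold comp.
  rewrite (proj2 Hd z Hz), (proj2 Hd w Hw), <- Hqz. exact (f_equal (fun k => k z) Hq).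
Qed.

(* The commutator of [q1 q^-1] and [q^-1 q2] lies in [Hj]; by the previous lemmas it is also
   the commutator of [d^-1] and [c^-1 c2], which lies in [RB]. *)
Lemma commutes_of_trivial_Rist_part Hj g c q d q1 g2 c2 q2 :
  is_subgroup Hj -> (forall h, Hj h -> RB h -> h = idp) ->
  restricts_to g c -> RB c -> comp p g = comp g q -> Hj q ->
  RB d -> comp p (comp g d) = comp (comp g d) q1 -> Hj q1 ->
  restricts_to g2 c2 -> RB c2 -> comp p g2 = comp g2 q2 -> Hj q2 ->
  comp (comp (pinv c) c2) d = comp d (comp (pinv c) c2).
Proof.
  intros HHj Htriv Hg Hc Hq Hjq Hd Hq1 Hjq1 Hg2 Hc2 Hq2 Hjq2.
  assert (HRB := is_subgroup_Rist G B HG).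
  assert (Hqp : is_perm q) by perm_of_subgroup. assert (Hcp : is_perm c) by perm_of_subgroup.
  assert (Hdp : is_perm d) by perm_of_subgroup.
  set (e := comp q1 (pinv q)). set (f := comp (pinv q) q2). set (s := comp (pinv c) c2).
  assert (Hs : RB s) by (apply subgroup_pinv_comp; auto).
  assert (Hcomm : comp (comp (comp e f) (pinv e)) (pinv f)
                  = comp (comp (comp (pinv d) s) (pinv (pinv d))) (pinv s)).
  { apply (commutator_eq_of_agree G B block_image); auto.
    - apply is_perm_comp; [perm_of_subgroup|apply is_perm_pinv; auto].
    - apply is_perm_comp; [apply is_perm_pinv; auto|perm_of_subgroup].
    - apply subgroup_pinv; auto.
    - intros w Hw. unfold e.
      rewrite (conj_quotient_on_block g c q (comp g d) (comp c d) q1); auto using restricts_to_comp_Rist.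
      + rewrite pinv_comp by auto. unfold comp. rewrite pinv_l; auto.
      + apply subgroup_comp; auto.
    - apply (conj_left_quotient_on_block g c q g2 c2 q2); auto.
    - intros w [b [Hb ->]] Hpb. apply (image_uncovered b Hb). exists p. auto.
    - apply (conj_quotient_fixes_outside g c q d q1); auto.
    - apply (conj_left_quotient_on_image g c q g2 c2 q2); auto. }
  apply commute_of_commutator_idp; [perm_of_subgroup|auto|].
  rewrite <- (pinv_pinv d Hdp) at 2. rewrite <- Hcomm. apply Htriv.
  - apply subgroup_commutator; auto; apply subgroup_comp; auto; apply subgroup_pinv; auto.
  - rewrite Hcomm. apply subgroup_commutator; auto. apply subgroup_pinv; auto.
Qed.

End Displacement.

Definition disjoint_blocks (reps : list perm) : Prop :=
  forall i j x, i < length reps -> j < length reps ->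
    Om (nth i reps idp) x -> Om (nth j reps idp) x -> i = j.

Lemma exists_block_representatives L :
  incl L P ->
  exists reps, incl reps P /\ disjoint_blocks reps /\
    forall a, In a L -> exists i, i < length reps /\ Om a = Om (nth i reps idp).
Proof.
  induction L as [|a L IH]; intro HL.
  - exists []. split; [intros r []|split; [intros i j x Hi|intros a []]]. simpl in Hi. lia.
  - destruct IH as [reps [Hreps [Hdisj Hidx]]]; [intros b Hb; apply HL; right; auto|].
    destruct (classic (exists i, i < length reps /\ Om a = Om (nth i reps idp))) as [Hold|Hnew].
    + exists reps. split; [auto|split; [auto|]]. intros b [<-|Hb]; auto.
    + exists (reps ++ [a]). split; [|split].
      * intros r Hr. apply in_app_iff in Hr as [Hr|[<-|[]]]; [auto|apply HL; left; auto].
      * assert (Hsep : forall i x, i < length reps -> Om (nth i reps idp) x -> ~ Om a x).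
        { intros i x Hi Hix Hax. apply Hnew. exists i. split; auto.
          destruct (proj1 (proj2 HDC) a (nth i reps idp)) as [Heq|Hdisj'];
            [apply HL; left; auto|apply Hreps, nth_In; auto| |].
          - extensionality y. apply propositional_extensionality. apply Heq.
          - exfalso. apply (Hdisj' x). auto. }
        intros i j x Hi Hj Hxi Hxj. rewrite length_app in Hi, Hj. simpl in Hi, Hj.
        destruct (Nat.eq_dec i (length reps)) as [->|Hi']; destruct (Nat.eq_dec j (length reps)) as [->|Hj']; auto.
        -- rewrite nth_middle in Hxi. rewrite app_nth1 in Hxj by lia. exfalso. apply (Hsep j x); auto; lia.
        -- rewrite nth_middle in Hxj. rewrite app_nth1 in Hxi by lia. exfalso. apply (Hsep i x); auto; lia.
        -- rewrite app_nth1 in Hxi, Hxj by lia. apply (Hdisj i j x); auto; lia.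
      * intros b [<-|Hb].
        -- exists (length reps). rewrite length_app, nth_middle. simpl. split; [lia|reflexivity].
        -- destruct (Hidx b Hb) as [i [Hi Eb]]. exists i. rewrite length_app, app_nth1 by auto. split; [lia|auto].
Qed.

Lemma exists_block_indexing :
  exists reps idx, incl reps P /\ disjoint_blocks reps /\
    forall a, In a P -> idx a < length reps /\ Om a = Om (nth (idx a) reps idp).
Proof.
  destruct (exists_block_representatives P (incl_refl P)) as [reps [Hreps [Hdisj Hidx]]].
  destruct (choice_on (fun a => In a P) (fun a i => i < length reps /\ Om a = Om (nth i reps idp)) 0 Hidx)
    as [idx Hidx'].
  exists reps, idx. auto.
Qed.

Definition block_product (t : list perm) : perm := fold_right comp idp t.

Definition block_tuple (reps t : list perm) : Prop :=
  length t = length reps /\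
  forall i, i < length reps -> Rist Omega G (Om (nth i reps idp)) (nth i t idp).

Lemma block_tuple_cons r reps x t :
  block_tuple (r :: reps) (x :: t) <-> Rist Omega G (Om r) x /\ block_tuple reps t.
Proof.
  split.
  - intros [Hlen Ht]. split; [apply (Ht 0); simpl; lia|].
    split; [simpl in Hlen; lia|]. intros i Hi. apply (Ht (S i)). simpl. lia.
  - intros [Hx [Hlen Ht]]. split; [simpl; lia|]. intros [|i] Hi; simpl; auto. apply Ht. simpl in Hi. lia.
Qed.

Lemma block_product_in_G reps t : block_tuple reps t -> G (block_product t).
Proof.
  revert t. induction reps as [|r reps IH]; intros [|x t] Ht.
  - exact (subgroup_id G HG).
  - destruct Ht as [Hlen _]. discriminate.
  - destruct Ht as [Hlen _]. discriminate.
  - apply block_tuple_cons in Ht as [Hx Ht]. simpl. apply subgroup_comp; auto. apply Hx.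
Qed.

Lemma block_product_off_blocks reps t :
  block_tuple reps t -> forall w, (forall i, i < length reps -> ~ Om (nth i reps idp) w) ->
  block_product t w = w.
Proof.
  revert t. induction reps as [|r reps IH]; intros [|x t] Ht w Hw; try (destruct Ht as [Hlen _]; discriminate).
  - reflexivity.
  - apply block_tuple_cons in Ht as [Hx Ht]. simpl. unfold comp.
    rewrite (IH t Ht w); [apply (proj2 Hx); apply (Hw 0); simpl; lia|].
    intros i Hi. apply (Hw (S i)). simpl. lia.
Qed.

Lemma block_product_on_block reps t :
  disjoint_blocks reps -> block_tuple reps t ->
  forall i w, i < length reps -> Om (nth i reps idp) w -> block_product t w = nth i t idp w.
Proof.
  revert t. induction reps as [|r reps IH]; intros [|x t] Hdisj Ht i w Hi Hw;
    try (destruct Ht as [Hlen _]; discriminate); simpl in Hi; [lia|].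
  apply block_tuple_cons in Ht as [Hx Ht]. simpl. unfold comp.
  assert (Hdisj' : disjoint_blocks reps).
  { intros i' j' y Hi' Hj' Hyi Hyj.
    assert (S i' = S j') by (apply (Hdisj (S i') (S j') y); simpl; auto; lia). lia. }
  destruct i as [|i]; simpl in Hw |- *.
  - rewrite (block_product_off_blocks reps t Ht w); auto.
    intros j Hj Hwj. assert (0 = S j) by (apply (Hdisj 0 (S j) w); simpl; auto; lia). lia.
  - rewrite (IH t Hdisj' Ht i w) by (auto; lia). apply (proj2 Hx). intro Hrw.
    assert (Hti : Rist Omega G (Om (nth i reps idp)) (nth i t idp)) by (apply Ht; lia).
    assert (0 = S i) by (apply (Hdisj 0 (S i) (nth i t idp w)); simpl; auto; try lia;
                         apply (Rist_maps_in G); auto). lia.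
Qed.

Lemma block_product_restricts reps t a i :
  incl reps P -> disjoint_blocks reps -> block_tuple reps t -> i < length reps ->
  Om a = Om (nth i reps idp) -> restricts_to a (block_product t) (nth i t idp).
Proof.
  intros Hreps Hdisj Ht Hi Ea. split; [|split].
  - apply (subgroup_perm G); auto. apply (block_product_in_G reps); auto.
  - intros w Hw. apply (block_product_on_block reps); auto. rewrite <- Ea. auto.
  - intros w Hw. apply (block_product_off_blocks reps); auto.
    intros j Hj Hwj. apply Hw. exists (nth j reps idp). split; auto. apply Hreps, nth_In; auto.
Qed.

Lemma block_product_update reps t t' d :
  disjoint_blocks reps -> block_tuple reps t -> block_tuple reps t' -> d < length reps ->
  agree_off perm idp d t t' ->
  block_product t' = comp (block_product t) (comp (pinv (nth d t idp)) (nth d t' idp)).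
Proof.
  intros Hdisj Ht Ht' Hd Hag.
  set (Bd := Om (nth d reps idp)).
  assert (Hd_t : Rist Omega G Bd (nth d t idp)) by (apply Ht; auto).
  assert (Hd_t' : Rist Omega G Bd (nth d t' idp)) by (apply Ht'; auto).
  assert (HRB := is_subgroup_Rist G Bd HG).
  assert (Hdp : is_perm (nth d t idp)) by perm_of_subgroup.
  extensionality w. unfold comp. destruct (classic (Bd w)) as [Hw|Hw].
  - assert (Hw' : Bd (pinv (nth d t idp) (nth d t' idp w))).
    { apply (Rist_maps_in G Bd); auto; [apply subgroup_pinv; auto|apply (Rist_maps_in G Bd); auto]. }
    rewrite (block_product_on_block reps t' Hdisj Ht' d w Hd Hw),
            (block_product_on_block reps t Hdisj Ht d _ Hd Hw'), pinv_r; auto.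
  - rewrite (proj2 Hd_t' w Hw), (Rist_pinv_fix G Bd _ HG Hd_t w Hw).
    destruct (classic (exists i, i < length reps /\ Om (nth i reps idp) w)) as [[i [Hi Hwi]]|Hno].
    + rewrite (block_product_on_block reps t Hdisj Ht i w Hi Hwi),
              (block_product_on_block reps t' Hdisj Ht' i w Hi Hwi).
      rewrite (Hag i); [reflexivity|]. intros ->. contradiction.
    + rewrite (block_product_off_blocks reps t Ht w), (block_product_off_blocks reps t' Ht' w); auto;
        intros i Hi Hwi; apply Hno; eauto.
Qed.

End Configuration.

(** * The confinement argument *)

Section Confinement.
Variables (n : nat) (H : nat -> pset) (G : pset) (P : list perm) (Om : perm -> Omega -> Prop).
Hypotheses (HH : forall j, j < n -> is_subgroup (H j)) (HG : is_subgroup G)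
  (HPp : forall p, In p P -> is_perm p)
  (Hconf : forall g, G g -> exists j, j < n /\ exists p, In p P /\ conj_set Omega g (H j) p)
  (HDC : displacement_configuration Omega P Om)
  (Hrist : forall p, In p P ->
     (exists g, Rist Omega G (Om p) g /\ g <> idp) /\
     (forall g, FC_le Omega (n * length P) (Rist Omega G (Om p)) g <-> g = idp)).
Local Notation M := (n * length P).
Local Notation RB p := (Rist Omega G (Om p)).
Hypothesis Hsmall_normalizer : forall p j, In p P -> j < n -> (exists g, H j g /\ RB p g /\ g <> idp) ->
  ~ index_le (RB p) (normalizer Omega (RB p) (pset_inter (H j) (RB p))) M.

Lemma Rist_not_index_le_centralizer p d :
  In p P -> RB p d -> d <> idp -> ~ index_le (RB p) (centralizer (RB p) d) M.
Proof.
  intros Hp Hd Hne Hidx. apply Hne. apply (proj2 (Hrist p Hp)).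
  apply FC_le_of_index_centralizer; auto. apply is_subgroup_Rist; auto.
Qed.

Lemma Rist_not_index_le_trivial p : In p P -> ~ index_le (RB p) (fun g => g = idp) M.
Proof.
  intros Hp Hidx. destruct (proj1 (Hrist p Hp)) as [g [Hg Hne]].
  apply (Rist_not_index_le_centralizer p g Hp Hg Hne). apply (index_le_sub _ (fun g => g = idp)); auto.
  intros f ->. split; [apply subgroup_id, is_subgroup_Rist; auto|reflexivity].
Qed.

Variables (reps : list perm) (idx : perm -> nat).
Hypotheses (Hreps : incl reps P) (Hdisj : disjoint_blocks Om reps)
  (Hidx : forall a, In a P -> idx a < length reps /\ Om a = Om (nth (idx a) reps idp)).
Local Notation tuple := (block_tuple Om G reps).

Lemma Rist_nth_tuple t p : tuple t -> In p P -> RB p (nth (idx p) t idp).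
Proof. intros Ht Hp. destruct (Hidx p Hp) as [Hi ->]. apply Ht. auto. Qed.

Lemma restricts_tuple t p : tuple t -> In p P -> restricts_to P Om p (block_product t) (nth (idx p) t idp).
Proof. intros Ht Hp. destruct (Hidx p Hp). apply (block_product_restricts P Om G HG reps); auto. Qed.

Definition isolated_solutions (j : nat) (p : perm) : Prop :=
  ~ exists t d, tuple t /\ conj_set Omega (block_product t) (H j) p /\ RB p d /\ d <> idp /\
                conj_set Omega (comp (block_product t) d) (H j) p.

Definition coset_data (j : nat) (p : perm) (c : perm) (K : pset) : Prop :=
  is_subgroup K /\ subset K (RB p) /\ RB p c /\ ~ index_le (RB p) K M /\
  forall t, tuple t -> conj_set Omega (block_product t) (H j) p -> in_coset c K (nth (idx p) t idp).

Lemma coset_data_of_normalizer j p t0 q0 :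
  j < n -> In p P -> (exists g, H j g /\ RB p g /\ g <> idp) ->
  tuple t0 -> H j q0 -> comp p (block_product t0) = comp (block_product t0) q0 ->
  coset_data j p (nth (idx p) t0 idp) (normalizer Omega (RB p) (pset_inter (H j) (RB p))).
Proof.
  intros Hj Hp Hnt Ht0 Hq0 Eq0.
  assert (HRB := is_subgroup_Rist G (Om p) HG).
  assert (Hc0 := Rist_nth_tuple t0 p Ht0 Hp).
  split; [|split; [intros f [Hf _]; auto|split; [auto|split; [apply Hsmall_normalizer; auto|]]]].
  - apply is_subgroup_normalizer; auto. intros f [Hf _]. apply (subgroup_perm (H j)); auto.
  - intros t Ht [q [Hq Eq]]. exists (comp (pinv (nth (idx p) t0 idp)) (nth (idx p) t idp)). split.
    + apply (normalizes_Rist_part P Om HDC G HG p Hp (HPp p Hp) (H j)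
               (block_product t) _ q (block_product t0) _ q0);
        auto using restricts_tuple, Rist_nth_tuple.
    + rewrite comp_assoc, comp_pinv_r; auto. perm_of_subgroup.
Qed.

Lemma coset_data_of_centralizer j p t0 q0 d q1 :
  j < n -> In p P -> (forall h, H j h -> RB p h -> h = idp) ->
  tuple t0 -> H j q0 -> comp p (block_product t0) = comp (block_product t0) q0 ->
  RB p d -> d <> idp -> H j q1 -> comp p (comp (block_product t0) d) = comp (comp (block_product t0) d) q1 ->
  coset_data j p (nth (idx p) t0 idp) (centralizer (RB p) d).
Proof.
  intros Hj Hp Htriv Ht0 Hq0 Eq0 Hd Hne Hq1 Eq1.
  assert (HRB := is_subgroup_Rist G (Om p) HG).
  assert (Hc0 := Rist_nth_tuple t0 p Ht0 Hp).
  split; [apply is_subgroup_centralizer; auto|].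
  split; [intros f [Hf _]; auto|split; [auto|split; [apply Rist_not_index_le_centralizer; auto|]]].
  intros t Ht [q [Hq Eq]]. exists (comp (pinv (nth (idx p) t0 idp)) (nth (idx p) t idp)). split; [split|].
  - apply subgroup_pinv_comp; auto. apply Rist_nth_tuple; auto.
  - apply (commutes_of_trivial_Rist_part P Om HDC G HG p Hp (HPp p Hp) (H j) (block_product t0) _ q0 d q1
             (block_product t) _ q); auto using restricts_tuple, Rist_nth_tuple.
  - rewrite comp_assoc, comp_pinv_r; auto. perm_of_subgroup.
Qed.

Lemma exists_coset_data j p :
  j < n -> In p P -> ~ isolated_solutions j p -> exists cK, coset_data j p (fst cK) (snd cK).
Proof.
  intros Hj Hp Hnot. apply NNPP in Hnot as [t0 [d [Ht0 [[q0 [Hq0 Eq0]] [Hd [Hne [q1 [Hq1 Eq1]]]]]]]].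
  destruct (classic (exists g, H j g /\ RB p g /\ g <> idp)) as [Hnt|Htriv].
  - eexists (_, _). simpl. apply (coset_data_of_normalizer j p t0 q0); eauto.
  - eexists (_, _). simpl. apply (coset_data_of_centralizer j p t0 q0 d q1); auto.
    intros h Hh HRh. apply NNPP. intro Hh'. apply Htriv. exists h. auto.
Qed.

Lemma isolated_single_on_lines j p Us :
  In p P -> isolated_solutions j p -> (forall t, In t (tuples perm Us) -> tuple t) ->
  single_on_lines perm idp Us (idx p) (fun t => conj_set Omega (block_product t) (H j) p).
Proof.
  intros Hp Hiso HUs t t' Ht Ht' Hag Hconj Hconj'. apply NNPP. intro Hne. apply Hiso.
  destruct (Hidx p Hp) as [Hi Ep].
  set (c := nth (idx p) t idp). set (c' := nth (idx p) t' idp).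
  assert (Hc : RB p c) by (apply Rist_nth_tuple; auto). assert (Hc' : RB p c') by (apply Rist_nth_tuple; auto).
  assert (Hcp : is_perm c) by (apply (Rist_perm G (Om p)); auto).
  exists t, (comp (pinv c) c'). split; [auto|split; [auto|split; [|split]]].
  - apply subgroup_pinv_comp; auto. apply is_subgroup_Rist; auto.
  - intro E. apply Hne. destruct (HUs t Ht) as [Hlen _]. destruct (HUs t' Ht') as [Hlen' _].
    apply (nth_ext _ _ idp idp); [lia|]. intros i Hi'.
    destruct (Nat.eq_dec i (idx p)) as [->|Hip]; [|apply Hag; auto].
    fold c c'. rewrite <- (comp_id_r c), <- E, comp_assoc, comp_pinv_r; auto.
  - unfold c, c'. rewrite <- (block_product_update Om G HG reps t t' (idx p)); auto.
Qed.

Lemma exists_avoiding_choices (Cs : nat -> list (perm * pset)) s :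
  (forall i, i < length reps -> forall c K, In (c, K) (Cs i) ->
     is_subgroup K /\ subset K (RB (nth i reps idp)) /\ RB (nth i reps idp) c /\
     ~ index_le (RB (nth i reps idp)) K M) ->
  (forall i, length (Cs i) + s <= S M) ->
  exists Us, length Us = length reps /\ forall i, i < length reps ->
    length (nth i Us []) = s /\ NoDup (nth i Us []) /\
    forall x, In x (nth i Us []) -> RB (nth i reps idp) x /\ forall c K, In (c, K) (Cs i) -> ~ in_coset c K x.
Proof.
  intros HCs Hlen.
  destruct (choice_on (fun i => i < length reps)
              (fun i U => length U = s /\ NoDup U /\
                 forall x, In x U -> RB (nth i reps idp) x /\ forall c K, In (c, K) (Cs i) -> ~ in_coset c K x)
              []) as [U HU].
  { intros i Hi. assert (Hrep : In (nth i reps idp) P) by (apply Hreps, nth_In; auto).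
    apply (exists_list_avoiding_cosets _ _ _ M); auto using Rist_not_index_le_trivial.
    apply is_subgroup_Rist; auto. }
  exists (map U (seq 0 (length reps))). rewrite length_map, length_seq. split; [reflexivity|].
  intros i Hi. rewrite (nth_indep _ [] (U 0)) by (rewrite length_map, length_seq; auto).
  rewrite map_nth, seq_nth by auto. apply HU. auto.
Qed.

Lemma exists_coset_lists (CP : list (nat * perm)) :
  (forall j p, In (j, p) CP -> j < n /\ In p P /\ ~ isolated_solutions j p) ->
  exists Cs : nat -> list (perm * pset),
    (forall i, i < length reps -> forall c K, In (c, K) (Cs i) ->
       is_subgroup K /\ subset K (RB (nth i reps idp)) /\ RB (nth i reps idp) c /\
       ~ index_le (RB (nth i reps idp)) K M) /\
    (forall i, length (Cs i) <= length CP) /\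
    (forall j p, In (j, p) CP -> exists c K, In (c, K) (Cs (idx p)) /\
       forall t, tuple t -> conj_set Omega (block_product t) (H j) p -> in_coset c K (nth (idx p) t idp)).
Proof.
  intro HCP.
  destruct (choice_on (fun jp => In jp CP) (fun jp cK => coset_data (fst jp) (snd jp) (fst cK) (snd cK))
              (idp, fun _ => False)) as [dat Hdat].
  { intros [j p] Hjp. destruct (HCP j p Hjp) as [Hj [Hp Hnot]]. apply exists_coset_data; auto. }
  exists (fun i => map dat (filter (fun jp => Nat.eqb (idx (snd jp)) i) CP)). split; [|split].
  - intros i Hi c K HcK. apply in_map_iff in HcK as [[j p] [E Hjp]].
    apply filter_In in Hjp as [Hjp Eidx]. apply Nat.eqb_eq in Eidx. simpl in Eidx. subst i.
    destruct (Hdat _ Hjp) as [HK [HKR [Hc [Hnot _]]]]. rewrite E in HK, HKR, Hc, Hnot. simpl in *.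
    destruct (HCP j p Hjp) as [_ [Hp _]]. rewrite <- (proj2 (Hidx p Hp)). auto.
  - intro i. rewrite length_map. apply filter_length_le.
  - intros j p Hjp. exists (fst (dat (j, p))), (snd (dat (j, p))). split.
    + rewrite <- surjective_pairing. apply in_map. apply filter_In. split; auto. apply Nat.eqb_refl.
    + apply (Hdat _ Hjp).
Qed.

Lemma tuples_block_tuple Us :
  length Us = length reps -> (forall i x, i < length reps -> In x (nth i Us []) -> RB (nth i reps idp) x) ->
  forall t, In t (tuples perm Us) -> tuple t.
Proof.
  intros HUslen HUs t Ht. destruct (in_tuples perm Us t idp Ht) as [Hlen Hnth].
  split; [lia|]. intros i Hi. apply HUs; auto. apply Hnth. lia.
Qed.

Lemma confinement_contradiction : False.
Proof.
  destruct (exists_partition_pairs n P isolated_solutions) as [GP [CP [HGP [HCP Hsize]]]].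
  destruct (exists_coset_lists CP (fun j p Hjp => proj1 (HCP j p) Hjp)) as [Cs [HCs [HCslen HCscov]]].
  destruct (exists_avoiding_choices Cs (S (length GP))) as [Us [HUslen HUs]]; auto.
  { intro i. specialize (HCslen i). lia. }
  assert (Htuples := tuples_block_tuple Us HUslen (fun i x Hi Hx => proj1 (proj2 (proj2 (HUs i Hi)) x Hx))).
  destruct (tuples_not_covered perm idp Us (S (length GP))
              (map (fun jp => (idx (snd jp),
                               fun t => conj_set Omega (block_product t) (H (fst jp)) (snd jp))) GP))
    as [t [Ht Hout]].
  - intros U HU. destruct (In_nth Us U [] HU) as [i [Hi <-]]. rewrite HUslen in Hi.
    destruct (HUs i Hi) as [Hlen [Hnd _]]. auto.
  - rewrite length_map. lia.
  - intros d Q HdQ. apply in_map_iff in HdQ as [[j p] [E Hjp]]. injection E as <- <-.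
    apply HGP in Hjp as [Hj [Hp Hiso]].
    split; [rewrite HUslen; apply Hidx; auto|]. apply isolated_single_on_lines; auto.
  - destruct (Hconf (block_product t)) as [j [Hj [p [Hp Hconj]]]].
    { apply (block_product_in_G Om G HG reps). auto. }
    destruct (classic (isolated_solutions j p)) as [Hiso|Hnot].
    + apply (Hout (idx p) (fun t => conj_set Omega (block_product t) (H j) p)); auto.
      apply in_map_iff. exists (j, p). split; auto. apply HGP. auto.
    + destruct (HCscov j p) as [c [K [HcK Hcoset]]]; [apply HCP; auto|].
      destruct (Hidx p Hp) as [Hi _]. destruct (HUs (idx p) Hi) as [_ [_ HU]].
      assert (Hti : In (nth (idx p) t idp) (nth (idx p) Us [])).
      { destruct (in_tuples perm Us t idp Ht) as [_ Hnth]. apply Hnth. lia. }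
      apply (proj2 (HU _ Hti) c K HcK). apply Hcoset; auto.
Qed.

End Confinement.
End Permutations.

Theorem theorem3p17 (Omega : Type) (n : nat) (H : nat -> pset Omega) (G : pset Omega)
  (P : list (perm Omega)) (r : nat) (Om : perm Omega -> Omega -> Prop) :
  1 <= n ->
  (forall j, j < n -> is_subgroup Omega (H j)) ->
  is_subgroup Omega G ->
  confined Omega n H G ->
  NoDup P ->
  confining_subset Omega n H G P ->
  r = length P ->
  displacement_configuration Omega P Om ->
  (forall s, In s P ->
     (exists g, Rist Omega G (Om s) g /\ g <> idp) /\
     (forall g, FC_le Omega (n * r) (Rist Omega G (Om s)) g <-> g = idp)) ->
  exists rho, In rho P /\ exists k, k < n /\
    exists N : pset Omega, is_subgroup Omega N /\
      subset Omega N (H k) /\ subset Omega N (Rist Omega G (Om rho)) /\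
      (exists g, N g /\ g <> idp) /\
      index_le Omega (Rist Omega G (Om rho))
        (normalizer Omega (Rist Omega G (Om rho)) N) (n * r).
Proof.
  intros _ HH HG _ _ [HPp Hconf] -> HDC Hrist. apply NNPP. intro Hno.
  destruct (exists_block_indexing Omega P Om HDC) as [reps [idx [Hreps [Hdisj Hidx]]]].
  apply (confinement_contradiction Omega n H G P Om HH HG) with (reps := reps) (idx := idx); auto.
  - intros p Hp. apply HPp. auto.
  - intros p j Hp Hj [g [HgH [HgR Hg]]] Hidx_le. apply Hno.
    exists p. split; auto. exists j. split; auto. exists (pset_inter Omega (H j) (Rist Omega G (Om p))).
    split; [apply is_subgroup_inter; auto; apply is_subgroup_Rist; auto|].
    split; [intros f [Hf _]; auto|split; [intros f [_ Hf]; auto|split; auto]].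
    exists g. split; [split|]; auto.
Qed.
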